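(* Let $\mathcal K$ be a tame topological Kuranishi atlas. Then $|\mathcal K|$ and $|\mathbf E_{\mathcal K}|$ (with their quotient topologies) are Hausdorff, and for each $I\in\mathcal I_{\mathcal K}$ the maps $\pi_{\mathcal K}|_{U_I}:U_I\to|\mathcal K|$ and $\pi_{\mathbf E_{\mathcal K}}|_{\mathbb E_I}:\mathbb E_I\to|\mathbf E_{\mathcal K}|$ are homeomorphisms onto their images.
   Context: $X$ is a compact metrizable space. Charts: a topological Kuranishi chart for $X$ with open footprint $F\subset X$ is a tuple $\mathbf K=(U,\mathbb E,\mathfrak s,\psi)$ where $U$ is a separable, locally compact, metrizable space; $\mathbb E$ is a separable, locally compact, metrizable space with continuous maps $\mathrm{pr}:\mathbb E\to U$ and $0:U\to\mathbb E$ with $\mathrm{pr}\circ0=\mathrm{id}_U$; $\mathfrak s:U\to\mathbb E$ is continuous with $\mathrm{pr}\circ\mathfrak s=\mathrm{id}_U$; and $\psi$ is a homeomorphism from $\mathfrak s^{-1}(0):=\{x\in U:\mathfrak s(x)=0(x)\}$ onto $F$. Coordinate changes: for charts $\mathbf K_I,\mathbf K_J$ with $F_I\cap F_J\neq\emptyset$, a coordinate change $\widehat\Phi_{IJ}:\mathbf K_I\to\mathbf K_J$ consists of an open set $U_{IJ}\subset U_I$ with $U_{IJ}\cap\mathfrak s_I^{-1}(0_I)=\psi_I^{-1}(F_I\cap F_J)$ and a topological embedding $\widehat\Phi_{IJ}:\mathrm{pr}_I^{-1}(U_{IJ})\to\mathbb E_J$ such that there is a topological embedding $\phi_{IJ}:U_{IJ}\to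 U_J$ with $\mathrm{pr}_J\circ\widehat\Phi_{IJ}=\phi_{IJ}\circ\mathrm{pr}_I$, $0_J\circ\phi_{IJ}=\widehat\Phi_{IJ}\circ0_I$ and $\mathfrak s_J\circ\phi_{IJ}=\widehat\Phi_{IJ}\circ\mathfrak s_I$ on $U_{IJ}$, and $\phi_{IJ}=\psi_J^{-1}\circ\psi_I$ on $U_{IJ}\cap\mathfrak s_I^{-1}(0_I)$. Atlases: a covering family of basic charts is a finite family $(\mathbf K_i)_{i=1,\dots,N}$ of charts whose footprints cover $X$; $\mathcal I_{\mathcal K}$ is the set of nonempty $I\subset\{1,\dots,N\}$ with $F_I:=\bigcap_{i\in I}F_i\neq\emptyset$. Transition data consist of a chart $\mathbf K_J$ with footprint $F_J$ for each $J\in\mathcal I_{\mathcal K}$ with $|J|\ge2$ (and $\mathbf K_{\{i\}}:=\mathbf K_i$), and a coordinate change $\widehat\Phi_{IJ}:\mathbf K_I\to\mathbf K_J$ for all $I\subsetneq J$ in $\mathcal I_{\mathcal K}$. We set $U_{II}:=U_I$, $\phi_{II}:=\mathrm{id}_{U_I}$. For $I\subsetneq J\subsetneq K$ let $U_{IJK}:=U_{IJ}\cap\phi_{IJ}^{-1}(U_{JK})$. The triple satisfies the weak cocycle condition if $\widehat\Phi_{JK}\circ\widehat\Phi_{IJ}=\widehat\Phi_{IK}$ on $\mathrm{pr}_I^{-1}(U_{IJK}\cap U_{IK})$; the cocycle condition if in addition $U_{IJK}\subset U_{IK}$; the strong cocycle condition if in addition $U_{IJK}=U_{IK}$. A weak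 topological Kuranishi atlas $\mathcal K$ is a covering family with transition data satisfying the weak cocycle condition for all such triples; a topological Kuranishi atlas is one satisfying the cocycle condition for all triples. Filtrations: a weak topological Kuranishi atlas is filtered if it is equipped with closed subsets $\mathbb E_{IJ}\subset\mathbb E_J$ for all $J\in\mathcal I_{\mathcal K}$ and $I\subset J$ (including $I=\emptyset$) such that (i) $\mathbb E_{JJ}=\mathbb E_J$ and $\mathbb E_{\emptyset J}=\mathrm{im}\,0_J$; (ii) $\widehat\Phi_{JK}(\mathrm{pr}_J^{-1}(U_{JK})\cap\mathbb E_{IJ})=\mathbb E_{IK}\cap\mathrm{pr}_K^{-1}(\mathrm{im}\,\phi_{JK})$ for $I\subset J\subsetneq K$; (iii) $\mathbb E_{IJ}\cap\mathbb E_{HJ}=\mathbb E_{(I\cap H)J}$ for $I,H\subset J$; (iv) $\mathrm{im}\,\phi_{IJ}$ is an open subset of $\mathfrak s_J^{-1}(\mathbb E_{IJ})$ for $I\subsetneq J$. Tameness: a filtered weak topological Kuranishi atlas is tame if $U_{IJ}\cap U_{IK}=U_{I(J\cup K)}$ for all $I,J,K\in\mathcal I_{\mathcal K}$ with $I\subset J,K$ (where $U_{IL}:=\emptyset$ if $L\notin\mathcal I_{\mathcal K}$), and $\phi_{IJ}(U_{IK})=U_{JK}\cap\mathfrak s_J^{-1}(\mathbb E_{IJ})$ for all $I\subset J\subset K$ in $\mathcal I_{\mathcal K}$ (equalities of indices allowed). Virtual neighbourhood: for a topological Kuranishi atlas, $|\mathcal K|$ is the quotient of $\bigsqcup_{I\in\mathcal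 I_{\mathcal K}}U_I=\{(I,x):x\in U_I\}$ by the equivalence relation generated by $(I,x)\sim(J,\phi_{IJ}(x))$ for $I\subset J$, $x\in U_{IJ}$, with the quotient topology and projection $\pi_{\mathcal K}$; similarly $|\mathbf E_{\mathcal K}|$ is the quotient of $\bigsqcup_I\mathbb E_I$ by the relation generated by $(I,e)\sim(J,\widehat\Phi_{IJ}(e))$ for $e\in\mathrm{pr}_I^{-1}(U_{IJ})$, with projection $\pi_{\mathbf E_{\mathcal K}}$. *)

From HB Require Import structures.
From mathcomp Require Import all_boot.
From Stdlib Require Import Rdefinitions Relations FunctionalExtensionality PropExtensionality.
Set Implicit Arguments.
Unset Strict Implicit.
Unset Printing Implicit Defensive.

Record Top := mkTop {
  car :> Type;
  open : (car -> Prop) -> Prop;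
  open_setT : open (fun _ => True);
  open_setI : forall A B, open A -> open B -> open (fun x => A x /\ B x);
  open_bigU : forall (F : (car -> Prop) -> Prop),
      (forall A, F A -> open A) -> open (fun x => exists A, F A /\ A x)
}.
Arguments open {t} _.

Definition closed {T : Top} (A : T -> Prop) : Prop := open (fun x => ~ A x).

Definition continuous {S T : Top} (f : S -> T) : Prop :=
  forall V : T -> Prop, open V -> open (fun x => V (f x)).

Definition hausdorff (T : Top) : Prop :=
  forall x y : T, x <> y -> exists V W : T -> Prop,
    open V /\ open W /\ V x /\ W y /\ forall z, ~ (V z /\ W z).

Definition homeomorphism {S T : Top} (f : S -> T) : Prop :=
  exists g : T -> S, (forall x, g (f x) = x) /\ (forall y, f (g y) = y) /\
    continuous f /\ continuous g.

Definition compact_set {T : Top} (K : T -> Prop) : Prop :=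
  forall F : (T -> Prop) -> Prop, (forall A, F A -> open A) ->
    (forall x, K x -> exists A, F A /\ A x) ->
    exists l : list (T -> Prop), (forall A, List.In A l -> F A) /\
      (forall x, K x -> exists A, List.In A l /\ A x).

Definition compact_space (T : Top) : Prop := compact_set (fun _ : T => True).

Definition locally_compact (T : Top) : Prop :=
  forall x : T, exists V K : T -> Prop, open V /\ V x /\
    (forall y, V y -> K y) /\ compact_set K.

Definition countable_set {T : Type} (D : T -> Prop) : Prop :=
  exists f : {x | D x} -> nat, injective f.

Definition separable (T : Top) : Prop :=
  exists D : T -> Prop, countable_set D /\
    forall V : T -> Prop, open V -> (exists x, V x) -> exists x, D x /\ V x.

Definition is_metric {T : Type} (d : T -> T -> R) : Prop :=
  (forall x y, Rle R0 (d x y)) /\ (forall x y, d x y = R0 <-> x = y) /\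
  (forall x y, d x y = d y x) /\
  (forall x y z, Rle (d x z) (Rplus (d x y) (d y z))).

Definition metrizable (T : Top) : Prop :=
  exists d : T -> T -> R, is_metric d /\
    forall V : T -> Prop, open V <->
      (forall x, V x -> exists eps, Rlt R0 eps /\
                 forall y, Rlt (d x y) eps -> V y).

Section Subspace.
Variables (T : Top) (P : T -> Prop).
Definition sub_open (V : {x | P x} -> Prop) : Prop :=
  exists W : T -> Prop, open W /\ forall x, V x <-> W (proj1_sig x).
Lemma sub_open_setT : sub_open (fun _ => True).
Proof. exists (fun _ => True); split; [exact: open_setT | by []]. Qed.
Lemma sub_open_setI A B : sub_open A -> sub_open B ->
  sub_open (fun x => A x /\ B x).
Proof.
move=> [WA [oA hA]] [WB [oB hB]]; exists (fun x => WA x /\ WB x).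
split; first exact: open_setI.
by move=> x; rewrite hA hB.
Qed.
Lemma sub_open_bigU (F : ({x | P x} -> Prop) -> Prop) :
  (forall A, F A -> sub_open A) -> sub_open (fun x => exists A, F A /\ A x).
Proof.
move=> hF.
exists (fun y => exists W, (open W /\ exists A, F A /\ forall x, A x <-> W (proj1_sig x)) /\ W y).
split.
  apply: (open_bigU (F := fun W => open W /\ exists A, F A /\ forall x, A x <-> W (proj1_sig x))).
  by move=> W [].
move=> x; split.
  move=> [A [FA Ax]]; have [W [oW hW]] := hF A FA.
  exists W; split; last by rewrite -hW.
  by split=> //; exists A.
move=> [W [[oW [A [FA hA]]] Wx]]; exists A; split=> //; by rewrite hA.
Qed.
Definition subspace : Top :=
  @mkTop {x | P x} sub_open sub_open_setT sub_open_setI sub_open_bigU.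
End Subspace.

Definition image_of {S T : Top} (f : S -> T) : T -> Prop :=
  fun y => exists x, f x = y.
Definition corestr {S T : Top} (f : S -> T) : S -> subspace (image_of f) :=
  fun x => exist _ (f x) (ex_intro _ x erefl).
Definition embedding {S T : Top} (f : S -> T) : Prop :=
  homeomorphism (corestr f).
Definition embedding_on {S T : Top} (f : S -> T) (P : S -> Prop) : Prop :=
  @embedding (subspace P) T (fun x => f (proj1_sig x)).

Section SumSpace.
Variables (Ix : Type) (T : Ix -> Top).
Definition sum_open (V : {i : Ix & T i} -> Prop) : Prop :=
  forall i, open (fun x : T i => V (existT _ i x)).
Lemma sum_open_setT : sum_open (fun _ => True).
Proof. by move=> i; exact: open_setT. Qed.
Lemma sum_open_setI A B : sum_open A -> sum_open B ->
  sum_open (fun x => A x /\ B x).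
Proof. by move=> hA hB i; apply: open_setI. Qed.
Lemma sum_open_bigU (F : ({i : Ix & T i} -> Prop) -> Prop) :
  (forall A, F A -> sum_open A) -> sum_open (fun x => exists A, F A /\ A x).
Proof.
move=> hF i.
have := @open_bigU (T i) (fun W => exists A, F A /\ W = (fun x => A (existT _ i x))).
move=> h.
have -> : (fun x : T i => exists A, F A /\ A (existT _ i x)) =
  (fun x => exists W, (exists A, F A /\ W = (fun x => A (existT _ i x))) /\ W x).
  apply: FunctionalExtensionality.functional_extensionality=> x.
  apply: PropExtensionality.propositional_extensionality; split.
    by move=> [A [FA Ax]]; exists (fun x => A (existT _ i x)); split=> //; exists A.
  by move=> [W [[A [FA ->]] Wx]]; exists A.
by apply: h => W [A [FA ->]]; apply: hF.
Qed.
Definition sum_space : Top :=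
  @mkTop {i : Ix & T i} sum_open sum_open_setT sum_open_setI sum_open_bigU.
End SumSpace.

Section Quotient.
Variables (T : Top) (Rel : T -> T -> Prop).
Definition gen_equiv : T -> T -> Prop := clos_refl_sym_trans T Rel.
Definition quot_type : Type :=
  {P : T -> Prop | exists x, P = gen_equiv x}.
Definition quot_proj (x : T) : quot_type :=
  exist _ (gen_equiv x) (ex_intro _ x erefl).
Definition quot_open (V : quot_type -> Prop) : Prop :=
  open (fun x => V (quot_proj x)).
Lemma quot_open_setT : quot_open (fun _ => True).
Proof. exact: open_setT. Qed.
Lemma quot_open_setI A B : quot_open A -> quot_open B ->
  quot_open (fun x => A x /\ B x).
Proof. by move=> hA hB; apply: open_setI. Qed.
Lemma quot_open_bigU (F : (quot_type -> Prop) -> Prop) :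
  (forall A, F A -> quot_open A) -> quot_open (fun x => exists A, F A /\ A x).
Proof.
move=> hF; rewrite /quot_open.
have -> : (fun x => exists A, F A /\ A (quot_proj x)) =
  (fun x => exists W, (exists A, F A /\ W = (fun y => A (quot_proj y))) /\ W x).
  apply: FunctionalExtensionality.functional_extensionality=> x.
  apply: PropExtensionality.propositional_extensionality; split.
    by move=> [A [FA Ax]]; exists (fun y => A (quot_proj y)); split=> //; exists A.
  by move=> [W [[A [FA ->]] Wx]]; exists A.
by apply: open_bigU => W [A [FA ->]]; apply: hF.
Qed.
Definition quot_space : Top :=
  @mkTop quot_type quot_open quot_open_setT quot_open_setI quot_open_bigU.
End Quotient.

(* The
   chart K_I, the sets U_IJ, the maps Phihat_IJ, phi_IJ and the
   filtration E_IJ are given for all index sets; only those with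
   I, J in I_K (and I strictly contained in J for coordinate changes)
   are constrained / used. *)
Record KData (X : Top) (N : nat) := {
  Fp : 'I_N -> X -> Prop;
  U : {set 'I_N} -> Top;
  E : {set 'I_N} -> Top;
  pr : forall I : {set 'I_N}, E I -> U I;
  zr : forall I : {set 'I_N}, U I -> E I;
  sc : forall I : {set 'I_N}, U I -> E I;
  psi : forall I : {set 'I_N}, U I -> X;
  UU : forall I J : {set 'I_N}, U I -> Prop;
  Phi : forall I J : {set 'I_N}, E I -> E J;
  phi : forall I J : {set 'I_N}, U I -> U J;
  EF : forall I J : {set 'I_N}, E J -> Prop
}.

Arguments Fp {X N} _ _ _.
Arguments U {X N} _ _.
Arguments E {X N} _ _.
Arguments pr {X N} _ {I} _.
Arguments zr {X N} _ {I} _.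
Arguments sc {X N} _ {I} _.
Arguments psi {X N} _ {I} _.
Arguments UU {X N} _ I J _.
Arguments Phi {X N} _ I J _.
Arguments phi {X N} _ I J _.
Arguments EF {X N} _ I J _.

Section Atlas.
Variables (X : Top) (N : nat) (K : KData X N).

Definition FI (I : {set 'I_N}) (x : X) : Prop := forall i, i \in I -> Fp K i x.
Definition IK (I : {set 'I_N}) : Prop := I != set0 /\ exists x, FI I x.
Definition Z {I} (x : U K I) : Prop := sc K x = zr K x.

Definition chart_ok (I : {set 'I_N}) : Prop :=
  separable (U K I) /\ locally_compact (U K I) /\ metrizable (U K I) /\
  separable (E K I) /\ locally_compact (E K I) /\ metrizable (E K I) /\
  continuous (pr K (I:=I)) /\ continuous (zr K (I:=I)) /\
  continuous (sc K (I:=I)) /\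
  (forall x : U K I, pr K (zr K x) = x) /\
  (forall x : U K I, pr K (sc K x) = x) /\
  embedding_on (psi K (I:=I)) (@Z I) /\
  (forall y, FI I y <-> exists x : U K I, Z x /\ psi K x = y).

Definition coord_change_ok (I J : {set 'I_N}) : Prop :=
  open (UU K I J) /\
  (forall x, UU K I J x /\ Z x <-> Z x /\ FI I (psi K x) /\ FI J (psi K x)) /\
  embedding_on (Phi K I J) (fun e => UU K I J (pr K e)) /\
  embedding_on (phi K I J) (UU K I J) /\
  (forall e, UU K I J (pr K e) -> pr K (Phi K I J e) = phi K I J (pr K e)) /\
  (forall x, UU K I J x -> zr K (phi K I J x) = Phi K I J (zr K x)) /\
  (forall x, UU K I J x -> sc K (phi K I J x) = Phi K I J (sc K x)) /\
  (* phi_IJ = psi_J^{-1} o psi_I on U_IJ cap s_I^{-1}(0_I) *)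
  (forall x, UU K I J x -> Z x -> Z (phi K I J x) /\ psi K (phi K I J x) = psi K x).

Definition UIJK (I J L : {set 'I_N}) (x : U K I) : Prop :=
  UU K I J x /\ UU K J L (phi K I J x).

Definition cocycle_ok (I J L : {set 'I_N}) : Prop :=
  (forall e, UIJK J L (pr K e) /\ UU K I L (pr K e) ->
     Phi K J L (Phi K I J e) = Phi K I L e) /\
  (forall x, UIJK J L x -> UU K I L x).

Definition top_atlas : Prop :=
  (forall i, open (Fp K i)) /\
  (forall x, exists i, Fp K i x) /\
  (forall I, IK I -> chart_ok I) /\
  (forall I J, IK I -> IK J -> I \proper J -> coord_change_ok I J) /\
  (forall I J L, IK I -> IK J -> IK L -> I \proper J -> J \proper L ->
     cocycle_ok I J L).

Definition filtered : Prop :=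
  (forall I J : {set 'I_N}, IK J -> I \subset J -> closed (EF K I J)) /\
  (forall J, IK J -> forall e, EF K J J e) /\
  (forall J, IK J -> forall e, EF K set0 J e <-> exists x, e = zr K x) /\
  (forall I J L : {set 'I_N}, IK J -> IK L -> I \subset J -> J \proper L ->
     forall f : E K L,
       (exists e, UU K J L (pr K e) /\ EF K I J e /\ Phi K J L e = f) <->
       (EF K I L f /\ exists x, UU K J L x /\ phi K J L x = pr K f)) /\
  (forall I H J : {set 'I_N}, IK J -> I \subset J -> H \subset J ->
     forall e, EF K I J e /\ EF K H J e <-> EF K (I :&: H) J e) /\
  (forall I J, IK I -> IK J -> I \proper J ->
     (forall x, UU K I J x -> EF K I J (sc K (phi K I J x))) /\
     exists W : U K J -> Prop, open W /\
       forall y, (exists x, UU K I J x /\ phi K I J x = y) <->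
                 (W y /\ EF K I J (sc K y))).

(* U_IL extended with U_II := U_I and U_IL := empty for L not in I_K *)
Definition Uext (I L : {set 'I_N}) (x : U K I) : Prop :=
  IK L /\ (if I == L then True else UU K I L x).

Definition tame : Prop :=
  (forall I J L, IK I -> IK J -> IK L -> I \subset J -> I \subset L ->
     forall x : U K I, Uext J x /\ Uext L x <-> Uext (J :|: L) x) /\
  (* phi_IJ(U_IK) = U_JK cap s_J^{-1}(E_IJ); the case I = J is trivial
     since phi_II = id and E_II = E_I *)
  (forall I J L, IK I -> IK J -> IK L -> I \proper J -> J \subset L ->
     forall y : U K J,
       (exists x, Uext L x /\ UU K I J x /\ phi K I J x = y) <->
       (Uext L y /\ EF K I J (sc K y))).

Definition tame_top_atlas : Prop := top_atlas /\ filtered /\ tame.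

Definition IKtype := {I : {set 'I_N} | IK I}.

Definition Kdisj : Top := sum_space (fun I : IKtype => U K (proj1_sig I)).
Definition Krel (a b : Kdisj) : Prop :=
  proj1_sig (projT1 a) \proper proj1_sig (projT1 b) /\
  UU K _ (proj1_sig (projT1 b)) (projT2 a) /\
  projT2 b = phi K _ _ (projT2 a).
Definition Kquot : Top := quot_space Krel.
Definition pi_K : Kdisj -> Kquot := quot_proj Krel.

Definition Edisj : Top := sum_space (fun I : IKtype => E K (proj1_sig I)).
Definition Erel (a b : Edisj) : Prop :=
  proj1_sig (projT1 a) \proper proj1_sig (projT1 b) /\
  UU K _ (proj1_sig (projT1 b)) (pr K (projT2 a)) /\
  projT2 b = Phi K _ _ (projT2 a).
Definition Equot : Top := quot_space Erel.
Definition pi_E : Edisj -> Equot := quot_proj Erel.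

End Atlas.

(* The relation x ~ phi_IJ(x) is, after adding the diagonal, already a partial
   order by the cocycle condition, and tameness makes it confluent: two points
   are identified iff coordinate changes map them to a common point.  So pi is
   injective on each U_I, and if phi_LM(y) = phi_L1M(a) then y lies in U_{L L1}
   with phi_{L L1}(y) = a.  Open sets of |K| correspond to families of open sets
   V_I of U_I that are compatible with all coordinate changes.  Such families are
   built by recursion on |I|: in U_L, the points that V_L is forced to contain
   (images of the V_I for I a proper subset of L, zeros lying over a given open
   set of X) and those it must avoid form disjoint closed sets, closed because
   the image of phi_IL is the closed set s_L^{-1}(E_IL) and disjoint because two
   preimages of one point of U_L either are zeros with the same footprint or come
   from U_{I n J}.  Disjoint closed sets in the metrizable U_L are separated by
   open sets.  Doing this for two distinct points of |K| yields Hausdorffness;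
   doing it for one point and an open subset of U_I shows that pi is open onto
   its image.  For |E_K| the same argument applies to the bundles, with the zero
   section over the zero set in place of the zero set. *)

From Stdlib Require Import Reals Lra Relations Classical ClassicalEpsilon.
From Stdlib Require Import FunctionalExtensionality PropExtensionality ProofIrrelevance Eqdep.
From mathcomp Require Import all_boot.
Set Implicit Arguments.
Unset Strict Implicit.
Unset Printing Implicit Defensive.

(** * Point-set topology *)

Lemma open_ext (T : Top) (A B : T -> Prop) :
  (forall x, A x <-> B x) -> open A -> open B.
Proof.
move=> AB; have -> : B = A; last by [].
apply: functional_extensionality=> x; apply: propositional_extensionality.
by split=> /AB.
Qed.

Lemma closed_ext (T : Top) (A B : T -> Prop) :
  (forall x, A x <-> B x) -> closed A -> closed B.
Proof. by move=> AB; apply: open_ext => x; split=> nA ?; apply: nA; apply/AB. Qed.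

Lemma open_nbhs (T : Top) (A : T -> Prop) :
  (forall x, A x -> exists V, open V /\ V x /\ forall y, V y -> A y) -> open A.
Proof.
move=> hA.
apply: (@open_ext T (fun x => exists V, (open V /\ forall y, V y -> A y) /\ V x)).
  move=> x; split; first by move=> [V [[_ VA] Vx]]; apply: VA.
  by move=> /hA [V [oV [Vx VA]]]; exists V.
by apply: open_bigU => V [].
Qed.

Lemma open_set0 (T : Top) : open (fun _ : T => False).
Proof. by apply: open_nbhs => x []. Qed.

Lemma closed_set0 (T : Top) : closed (fun _ : T => False).
Proof. by apply: (open_ext (A := fun _ => True)); [move=> x; tauto | exact: open_setT]. Qed.

Lemma closed_setT (T : Top) : closed (fun _ : T => True).
Proof. by apply: (open_ext (A := fun _ => False)); [move=> x; tauto | exact: open_set0]. Qed.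

Lemma closed_setC (T : Top) (O : T -> Prop) : open O -> closed (fun y => ~ O y).
Proof. by apply: open_ext => x; split=> [? []|/NNPP]. Qed.

Lemma closed_setU (T : Top) (A B : T -> Prop) :
  closed A -> closed B -> closed (fun x => A x \/ B x).
Proof.
move=> cA cB; apply: (@open_ext T (fun x => ~ A x /\ ~ B x)); last exact: open_setI.
by move=> x; tauto.
Qed.

Lemma closed_setI (T : Top) (A B : T -> Prop) :
  closed A -> closed B -> closed (fun x => A x /\ B x).
Proof.
move=> cA cB; apply: open_nbhs => x nAB.
have [Ax|nAx] := classic (A x).
  by exists (fun x => ~ B x); split=> //; split=> [Bx|y nBy []]; [apply: nAB|].
by exists (fun x => ~ A x); split=> //; split=> // y nAy [].
Qed.

Lemma closed_preimage (S T : Top) (g : S -> T) (A : T -> Prop) :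
  continuous g -> closed A -> closed (fun x => A (g x)).
Proof. by move=> cg cA; apply: (cg (fun y => ~ A y)). Qed.

Lemma continuous_comp (S T T' : Top) (g : S -> T) (h : T -> T') :
  continuous g -> continuous h -> continuous (fun x => h (g x)).
Proof. by move=> cg ch V oV; exact: cg _ (ch _ oV). Qed.

Lemma continuous_id (S : Top) : continuous (fun x : S => x).
Proof. by []. Qed.

Lemma closed_fin_bigU (T : Top) (I : finType) (F : I -> T -> Prop) :
  (forall i, closed (F i)) -> closed (fun x => exists i, F i x).
Proof.
move=> cF.
have cFs (s : seq I) : closed (fun x => exists2 i, i \in s & F i x).
  elim: s => [|i s IHs].
    by apply: (closed_ext (A := fun _ => False)) (closed_set0 _) => x; split=> // -[].
  apply: (closed_ext (A := fun x => F i x \/ exists2 j, j \in s & F j x)); last first.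
    exact: closed_setU.
  move=> x; split=> [[Fi|[j js Fj]]|[j]]; first by exists i; rewrite ?inE ?eqxx.
    by exists j; rewrite // inE js orbT.
  by rewrite inE => /orP [/eqP->|js] Fj; [left|right; exists j].
apply: closed_ext (cFs (index_enum I)) => x.
by split=> [[i _ Fi]|[i Fi]]; exists i; rewrite ?mem_index_enum.
Qed.

Lemma open_fin_bigI (T : Top) (I : eqType) (F : I -> T -> Prop) (s : seq I) :
  (forall i, open (F i)) -> open (fun x => forall i, i \in s -> F i x).
Proof.
move=> oF; elim: s => [|i s IHs]; first by apply: open_ext (open_setT _).
apply: (open_ext (A := fun x => F i x /\ forall j, j \in s -> F j x)); last first.
  exact: open_setI.
move=> x; split=> [[Fi Fs] j|Fis].
  by rewrite inE => /orP [/eqP->|]; [|apply: Fs].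
by split=> [|j js]; apply: Fis; rewrite inE ?eqxx ?js ?orbT.
Qed.

Lemma closed_equalizer (S T : Top) (g h : S -> T) : hausdorff T ->
  continuous g -> continuous h -> closed (fun x => g x = h x).
Proof.
move=> hT cg ch; apply: open_nbhs => x ne.
have [V [V' [oV [oV' [Vx [V'x disj]]]]]] := hT _ _ ne.
exists (fun z => V (g z) /\ V' (h z)).
split; first by apply: open_setI; [apply: cg | apply: ch].
by split=> // z [Vz V'z] e; apply: (disj (g z)); split; rewrite // e.
Qed.

Section Metric.
Variables (T : Top) (d : T -> T -> R).
Hypothesis d_metric : is_metric d.
Hypothesis d_open : forall V : T -> Prop, open V <->
  (forall x, V x -> exists eps, Rlt R0 eps /\ forall y, Rlt (d x y) eps -> V y).

Let dxx x : d x x = R0. Proof. by case: d_metric => _ [dP _]; apply/dP. Qed.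
Let dC x y : d x y = d y x. Proof. by case: d_metric => _ [_ []]. Qed.
Let d_triangle x y z : Rle (d x z) (Rplus (d x y) (d y z)).
Proof. by case: d_metric => _ [_ [_]]. Qed.
Let d_gt0 x y : x <> y -> Rlt R0 (d x y).
Proof.
case: d_metric => d_ge0 [dP _] nxy.
by case: (Rle_lt_or_eq_dec _ _ (d_ge0 x y)) => // /esym/dP.
Qed.

Let ball_open x r : open (fun y => Rlt (d x y) r).
Proof.
apply/d_open => y dxy; exists (Rminus r (d x y)); split; first lra.
by move=> z; have := d_triangle x y z; lra.
Qed.

Lemma metric_hausdorff : hausdorff T.
Proof.
move=> x y nxy; have dxy := d_gt0 nxy.
exists (fun z => Rlt (d x z) (Rdiv (d x y) 2)), (fun z => Rlt (d y z) (Rdiv (d x y) 2)).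
do 2 (split; first exact: ball_open).
rewrite !dxx; do 2 (split; first lra).
by move=> z []; have := d_triangle x z y; rewrite (dC z y); lra.
Qed.

Lemma closed_subsingleton (A : T -> Prop) :
  (forall y y', A y -> A y' -> y = y') -> closed A.
Proof.
move=> Auniq; apply/d_open => x nAx.
have [[a Aa]|nA] := classic (exists a, A a); last first.
  by exists R1; split=> [|y _ Ay]; [lra | apply: nA; exists y].
have nxa : x <> a by move=> exa; apply: nAx; rewrite exa.
exists (d x a); split=> [|y dxy Ay]; first exact: d_gt0.
by rewrite (Auniq _ _ Ay Aa) in dxy; lra.
Qed.

(* Each neighbourhood is a union of balls B(s, r/2) with B(s, r) disjoint from
   the closed set; if two such balls met, the centre of the one with smaller r
   would lie in the other B(s, r). *)
Lemma metric_separation (A A' : T -> Prop) : closed A -> closed A' ->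
  exists V V' : T -> Prop, open V /\ open V' /\
    (forall y, A' y -> ~ A y -> V y) /\ (forall y, A y -> ~ A' y -> V' y) /\
    (forall y, V y -> ~ A y) /\ (forall y, V' y -> ~ A' y) /\
    (forall y, ~ (V y /\ V' y)).
Proof.
move=> cA cA'.
pose nbhs (S A : T -> Prop) y := exists s r, S s /\ Rlt R0 r /\
  (forall z, Rlt (d s z) r -> ~ A z) /\ Rlt (d s y) (Rdiv r 2).
have nbhs_open S A0 : open (nbhs S A0).
  apply/d_open => y [s [r [Ss [r_gt0 [sA dsy]]]]].
  exists (Rminus (Rdiv r 2) (d s y)); split=> [|z dyz]; first lra.
  exists s, r; do 3 split=> //; have := d_triangle s y z; lra.
have nbhs_sub (S A0 : T -> Prop) : closed A0 -> forall y, S y -> ~ A0 y -> nbhs S A0 y.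
  move=> cA0 y Sy nAy; have [r [r_gt0 rA]] := (d_open _).1 cA0 y nAy.
  by exists y, r; do 3 split=> //; rewrite dxx; lra.
have nbhs_avoid S A0 y : nbhs S A0 y -> ~ A0 y.
  by move=> [s [r [_ [r_gt0 [sA dsy]]]]]; apply: sA; lra.
exists (nbhs (fun y => A' y /\ ~ A y) A), (nbhs (fun y => A y /\ ~ A' y) A').
do 2 (split; first exact: nbhs_open).
split; first by move=> y A'y nAy; apply: nbhs_sub.
split; first by move=> y Ay nA'y; apply: nbhs_sub.
do 2 (split; first exact: nbhs_avoid).
move=> y [[s [r [[A's _] [_ [sA dsy]]]]] [s' [r' [[As' _] [_ [sA' ds'y]]]]]].
have := d_triangle s y s'; rewrite (dC y s') => dss'.
have [r'r|rr'] := Rle_lt_dec r' r; first by apply: (sA s' _ As'); lra.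
by apply: (sA' s _ A's); rewrite dC; lra.
Qed.
End Metric.

Lemma metrizable_hausdorff (T : Top) : metrizable T -> hausdorff T.
Proof. by move=> [d [dm dop]]; exact: metric_hausdorff dm dop. Qed.

Lemma embedding_on_inj (S T : Top) (g : S -> T) (P : S -> Prop) : embedding_on g P ->
  forall x y, P x -> P y -> g x = g y -> x = y.
Proof.
move=> [k [gK _]] x y Px Py gxy.
have : corestr (fun x0 : subspace P => g (proj1_sig x0)) (exist P x Px) =
       corestr (fun x0 : subspace P => g (proj1_sig x0)) (exist P y Py).
  by apply: eq_sig_hprop => [? ? ?|]; [exact: proof_irrelevance | exact: gxy].
by move=> /(f_equal k); rewrite !gK => -[].
Qed.

Lemma embedding_on_open_preimage (S T : Top) (g : S -> T) (P : S -> Prop) :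
  embedding_on g P -> forall V : T -> Prop, open V ->
  exists O : S -> Prop, open O /\ forall x, P x -> (O x <-> V (g x)).
Proof.
move=> [k [_ [_ [cg _]]]] V oV.
have [|O [oO OV]] := cg (fun y => V (proj1_sig y)); first by exists V.
by exists O; split=> // x Px; have /= h := OV (exist P x Px); split=> /h.
Qed.

Lemma embedding_on_open_image (S T : Top) (g : S -> T) (P : S -> Prop) :
  embedding_on g P -> forall O : S -> Prop, open O ->
  exists V : T -> Prop, open V /\ forall x, P x -> (V (g x) <-> O x).
Proof.
move=> [k [gK [_ [_ ck]]]] O oO.
have [|V [oV OV]] := ck (fun y => O (proj1_sig y)); first by exists O.
exists V; split=> // x Px.
have := OV (corestr (fun x0 : subspace P => g (proj1_sig x0)) (exist P x Px)).
by rewrite gK /= => h; split=> /h.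
Qed.

Lemma hausdorff_separate_subsingletons (T : Top) (A B : T -> Prop) : hausdorff T ->
  (forall y y', A y -> A y' -> y = y') -> (forall y y', B y -> B y' -> y = y') ->
  (forall y, ~ (A y /\ B y)) ->
  exists V V' : T -> Prop, open V /\ open V' /\ (forall y, ~ (V y /\ V' y)) /\
    (forall y, A y -> V y) /\ (forall y, B y -> V' y).
Proof.
move=> hT Auniq Buniq AB.
have [[a Aa]|nA] := classic (exists a, A a); last first.
  exists (fun _ => False), (fun _ => True); split; first exact: open_set0.
  split; first exact: open_setT.
  by split=> [? []//|]; split=> // y Ay; case: nA; exists y.
have [[b Bb]|nB] := classic (exists b, B b); last first.
  exists (fun _ => True), (fun _ => False); split; first exact: open_setT.
  split; first exact: open_set0.
  by split=> [? []//|]; split=> // y By; case: nB; exists y.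
have [|V [V' [oV [oV' [Va [V'b disj]]]]]] := hT a b.
  by move=> eab; apply: (AB a); rewrite {2}eab.
exists V, V'; do 3 split=> //.
by split=> y; [move/(Auniq _ _ Aa) <- | move/(Buniq _ _ Bb) <-].
Qed.

Section QuotientFacts.
Variables (T : Top) (Rel : T -> T -> Prop).

Lemma quot_proj_surj (p : quot_space Rel) : exists a, p = quot_proj Rel a.
Proof.
case: p => S [a eSa]; exists a; subst S.
by apply: eq_sig_hprop => // ? ? ?; apply: proof_irrelevance.
Qed.

Lemma quot_proj_eq a b : quot_proj Rel a = quot_proj Rel b <-> gen_equiv Rel a b.
Proof.
split=> [/(f_equal (@proj1_sig _ _)) /= ->|ab]; first exact: rst_refl.
apply: eq_sig_hprop => /= [? ? ?|]; first exact: proof_irrelevance.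
apply: functional_extensionality => c; apply: propositional_extensionality.
by split=> [|bc]; [apply: rst_trans; apply: rst_sym | apply: rst_trans bc].
Qed.

Lemma gen_equiv_saturated (V : T -> Prop) : (forall a b, Rel a b -> (V a <-> V b)) ->
  forall a b, gen_equiv Rel a b -> (V a <-> V b).
Proof.
move=> Vsat; apply: clos_refl_sym_trans_ind => //.
- by move=> x y _ e; split=> /e.
- by move=> x y z _ e1 _ e2; split=> [/e1/e2|/e2/e1].
Qed.

Definition quot_image (V : T -> Prop) (p : quot_space Rel) : Prop :=
  exists a, p = quot_proj Rel a /\ V a.

Lemma quot_image_proj (V : T -> Prop) : (forall a b, Rel a b -> (V a <-> V b)) ->
  forall b, quot_image V (quot_proj Rel b) <-> V b.
Proof.
move=> Vsat b; split=> [[a [/quot_proj_eq ba Va]]|Vb]; last by exists b.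
exact/(gen_equiv_saturated Vsat ba).
Qed.

Lemma quot_image_open (V : T -> Prop) : open V ->
  (forall a b, Rel a b -> (V a <-> V b)) -> open (quot_image V).
Proof. by move=> oV Vsat; apply: open_ext oV => b; rewrite quot_image_proj. Qed.
End QuotientFacts.

Lemma exists_fam_by_card (N : nat) (A : {set 'I_N} -> Type)
    (Q : (forall L, A L) -> forall L, A L -> Prop) (F0 : forall L, A L) :
  (forall (F F' : forall L, A L) (L : {set 'I_N}) a,
     (forall L0 : {set 'I_N}, L0 \proper L -> F L0 = F' L0) -> Q F L a -> Q F' L a) ->
  (forall (F : forall L, A L) (L : {set 'I_N}),
     (forall L0 : {set 'I_N}, L0 \proper L -> Q F L0 (F L0)) -> exists a, Q F L a) ->
  exists F, forall L, Q F L (F L).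
Proof.
move=> Qlocal Qstep.
suff /(_ N.+1) [F QF] : forall n, exists F : forall L, A L,
    forall L : {set 'I_N}, #|L| < n -> Q F L (F L).
  by exists F => L; apply: QF; rewrite ltnS; have := max_card L; rewrite card_ord.
elim=> [|n [F QF]]; first by exists F0.
have choiceL (L : {set 'I_N}) : exists a : A L,
    (forall L0 : {set 'I_N}, L0 \proper L -> Q F L0 (F L0)) -> Q F L a.
  have [below|nbelow] := classic (forall L0 : {set 'I_N}, L0 \proper L -> Q F L0 (F L0)).
    by have [a Qa] := Qstep F L below; exists a.
  by exists (F L) => /nbelow.
pose chosen L := constructive_indefinite_description _ (choiceL L).
pose F' L : A L := if #|L| < n then F L else proj1_sig (chosen L).
exists F' => L; rewrite ltnS leq_eqVlt => /orP [/eqP cardL|cardL].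
  have below (L0 : {set 'I_N}) : L0 \proper L -> #|L0| < n.
    by move=> /proper_card; rewrite cardL.
  apply: (Qlocal F) => [L0 /below lt|]; first by rewrite /F' lt.
  rewrite /F' cardL ltnn; apply: (proj2_sig (chosen L)).
  by move=> L0 /below; apply: QF.
apply: (Qlocal F) => [L0 /proper_card lt|]; first by rewrite /F' (ltn_trans lt cardL).
by rewrite /F' cardL; apply: QF.
Qed.

(** * Gluing charts along coordinate changes *)

Section Gluing.
Local Unset Implicit Arguments.
Variable N : nat.
Local Notation Idx := {set 'I_N}.
Implicit Types L : Idx.
Variables (P : Idx -> Prop) (W : Idx -> Top).
Variables (D : forall L L' : Idx, W L -> Prop) (phi : forall L L' : Idx, W L -> W L').
Local Set Implicit Arguments.

Definition glue_sum : Top := sum_space (fun i : {L : Idx | P L} => W (proj1_sig i)).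
Definition glue_rel (a b : glue_sum) : Prop :=
  proj1_sig (projT1 a) \proper proj1_sig (projT1 b) /\
  D _ (proj1_sig (projT1 b)) (projT2 a) /\
  projT2 b = phi _ _ (projT2 a).
Definition glue : Top := quot_space glue_rel.
Definition glue_proj : glue_sum -> glue := quot_proj glue_rel.
Definition glue_pt L (hL : P L) (x : W L) : glue_sum :=
  existT (fun i : {L : Idx | P L} => W (proj1_sig i)) (exist P L hL) x.

(* [W], [D], [phi] stand for the domains [U_I], [U_IJ] and the maps [phi_IJ]
   (or for [E_I], [pr_I^-1(U_IJ)], [Phihat_IJ]); [Z] is the zero set and [f] the
   footprint map [psi_I]. *)
Local Unset Implicit Arguments.
Variables (Z : forall L, W L -> Prop) (Y : Top) (f : forall L, W L -> Y).
Local Set Implicit Arguments.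

Hypothesis W_metrizable : forall L, P L -> metrizable (W L).
Hypothesis D_open : forall L L', P L -> P L' -> L \proper L' -> open (D L L').
Hypothesis phi_embedding : forall L L', P L -> P L' -> L \proper L' ->
  embedding_on (phi L L') (D L L').
Hypothesis phi_image_closed : forall L L', P L -> P L' -> L \proper L' ->
  closed (fun y : W L' => exists x, D L L' x /\ phi L L' x = y).
Hypothesis phi_cocycle : forall L0 L1 L2, P L0 -> P L1 -> P L2 ->
  L0 \proper L1 -> L1 \proper L2 -> forall x, D L0 L1 x -> D L1 L2 (phi L0 L1 x) ->
  D L0 L2 x /\ phi L1 L2 (phi L0 L1 x) = phi L0 L2 x.
Hypothesis D_union : forall L L1 L2, P L -> P L1 -> P L2 ->
  L \proper L1 -> L \proper L2 -> forall x, D L L1 x -> D L L2 x ->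
  P (L1 :|: L2) /\ D L (L1 :|: L2) x.
Hypothesis D_push : forall L L1 M, P L -> P L1 -> P M ->
  L \proper L1 -> L1 \proper M -> forall x, D L L1 x -> D L M x -> D L1 M (phi L L1 x).
Hypothesis phi_descends : forall L L1 M, P L -> P L1 -> P M ->
  L \proper L1 -> L1 \proper M -> forall y a, D L M y -> D L1 M a ->
  phi L M y = phi L1 M a -> D L L1 y /\ phi L L1 y = a.
Hypothesis phi_overlap : forall L0 L1 L, P L0 -> P L1 -> P L ->
  L0 \proper L -> L1 \proper L -> forall x0 x1, D L0 L x0 -> D L1 L x1 ->
  phi L0 L x0 = phi L1 L x1 ->
  (Z L0 x0 /\ Z L1 x1 /\ f L0 x0 = f L1 x1) \/
  (P (L0 :&: L1) /\
   exists x2, D (L0 :&: L1) L x2 /\ phi (L0 :&: L1) L x2 = phi L0 L x0).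
Hypothesis Z_closed : forall L, P L -> closed (Z L).
Hypothesis f_continuous : forall L, P L -> forall G : Y -> Prop, open G ->
  exists O : W L -> Prop, open O /\ forall x, Z L x -> (O x <-> G (f L x)).
Hypothesis phi_Z : forall L L', P L -> P L' -> L \proper L' -> forall x, D L L' x ->
  (Z L' (phi L L' x) <-> Z L x) /\ (Z L x -> f L' (phi L L' x) = f L x).
Hypothesis f_glue : forall L L' (hL : P L) (hL' : P L') (a : W L) (b : W L'),
  Z L a -> Z L' b -> f L a = f L' b -> glue_proj (glue_pt hL a) = glue_proj (glue_pt hL' b).
Hypothesis f_open : forall L, P L -> forall O : W L -> Prop, open O ->
  exists G : Y -> Prop, open G /\ (forall x, Z L x -> (G (f L x) <-> O x)) /\
    (forall y, G y -> exists x, Z L x /\ f L x = y).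
Hypothesis Y_hausdorff : hausdorff Y.

Lemma glue_pt_inj L (hL hL' : P L) x y : glue_pt hL x = glue_pt hL' y -> x = y.
Proof. by rewrite (proof_irrelevance _ hL' hL) => /(inj_pairT2 _ _ _ _ _). Qed.

Lemma glue_rel_trans a b c : glue_rel a b -> glue_rel b c -> glue_rel a c.
Proof.
case: a => [[L hL] x]; case: b => [[L1 hL1] y]; case: c => [[L2 hL2] z].
rewrite /glue_rel /= => -[LL1 [Dx ->]] [L1L2 [Dy ->]].
have [Dx2 ->] := phi_cocycle hL hL1 hL2 LL1 L1L2 Dx Dy.
by split; [exact: proper_trans LL1 L1L2 | split].
Qed.

(* The cocycle condition makes [glue_le] transitive, so it is the order
   generated by the coordinate changes; tameness makes it confluent. *)
Definition glue_le (a c : glue_sum) := a = c \/ glue_rel a c.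

Lemma glue_le_trans a b c : glue_le a b -> glue_le b c -> glue_le a c.
Proof.
case=> [->|ab] // [<-|bc]; [by right | by right; exact: glue_rel_trans ab bc].
Qed.

Lemma glue_le_push L L1 M (hL : P L) (hL1 : P L1) (hM : P M) x :
  L \proper L1 -> L1 \subset M -> D L L1 x -> D L M x ->
  glue_le (glue_pt hL1 (phi L L1 x)) (glue_pt hM (phi L M x)).
Proof.
move=> LL1 L1M D1x DMx.
have [eL1M|neL1M] := eqVneq L1 M.
  by subst M; left; rewrite (proof_irrelevance _ hM hL1).
have L1M' : L1 \proper M by rewrite properEneq neL1M L1M.
have D1Mx := D_push hL hL1 hM LL1 L1M' D1x DMx.
have [_ <-] := phi_cocycle hL hL1 hM LL1 L1M' D1x D1Mx.
by right.
Qed.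

Lemma glue_le_confluent b c d : glue_le b c -> glue_le b d ->
  exists e, glue_le c e /\ glue_le d e.
Proof.
case=> [<-|bc]; first by exists d; split=> //; left.
case=> [<-|bd]; first by exists c; split; [left|right].
move: bc bd; case: b => [[L hL] x]; case: c => [[L1 hL1] y]; case: d => [[L2 hL2] z].
rewrite /glue_rel /= => -[LL1 [D1x ->]] [LL2 [D2x ->]].
have [hM DMx] := D_union hL hL1 hL2 LL1 LL2 D1x D2x.
exists (glue_pt hM (phi L (L1 :|: L2) x)).
by split; apply: glue_le_push => //; [exact: subsetUl | exact: subsetUr].
Qed.

Lemma glue_proj_eq a b : glue_proj a = glue_proj b <-> exists c, glue_le a c /\ glue_le b c.
Proof.
rewrite /glue_proj quot_proj_eq; split.
  elim=> [x y r|x|x y _ [c [xc yc]]|x y z _ [c1 [xc1 yc1]] _ [c2 [yc2 zc2]]].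
  - by exists y; split; [right|left].
  - by exists x; split; left.
  - by exists c.
  - have [e [c1e c2e]] := glue_le_confluent yc1 yc2.
    by exists e; split; [exact: glue_le_trans c1e | exact: glue_le_trans c2e].
have le_equiv u v : glue_le u v -> gen_equiv glue_rel u v.
  by move=> [->|r]; [exact: rst_refl | exact: rst_step].
by move=> [c [ac bc]]; apply: rst_trans (le_equiv _ _ ac) (rst_sym _ _ _ _ (le_equiv _ _ bc)).
Qed.

Lemma glue_proj_rel a b : glue_rel a b -> glue_proj a = glue_proj b.
Proof. by move=> ab; apply/glue_proj_eq; exists b; split; [right|left]. Qed.

Local Notation idx c := (proj1_sig (projT1 c)).

Lemma glue_le_idx a c : glue_le a c -> idx a \subset idx c.
Proof. by case=> [->|[ac _]]; [exact: subxx | exact: proper_sub]. Qed.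

Lemma glue_le_neq a c : glue_le a c -> idx a != idx c -> glue_rel a c.
Proof. by case=> [->|//]; rewrite eqxx. Qed.

Lemma glue_le_chart L (hL : P L) x c : glue_le (glue_pt hL x) c ->
  idx c = L -> c = glue_pt hL x.
Proof.
case=> [<-|] //; case: c => [[M hM] y] /=; rewrite /glue_rel /= => -[LM _] eML.
by subst M; rewrite properxx in LM.
Qed.

Lemma glue_proj_inj L (hL hL' : P L) x y :
  glue_proj (glue_pt hL x) = glue_proj (glue_pt hL' y) -> x = y.
Proof.
move=> /glue_proj_eq [[[M hM] m] [xc yc]].
have [eLM|neLM] := eqVneq L M.
  subst M; rewrite (glue_le_chart xc erefl) in yc.
  exact: glue_pt_inj (glue_le_chart yc erefl).
have [LM [Dx ex]] := glue_le_neq xc neLM; have [_ [Dy ey]] := glue_le_neq yc neLM.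
by apply: (embedding_on_inj (phi_embedding hL hM LM)) => //=; rewrite -ex -ey.
Qed.

Lemma glue_proj_descends L I (hL : P L) (hI : P I) y a :
  glue_proj (glue_pt hL y) = glue_proj (glue_pt hI a) -> L \proper I ->
  D L I y /\ phi L I y = a.
Proof.
move=> /glue_proj_eq [[[M hM] m] [yc ac]] LI.
have [eIM|neIM] := eqVneq I M.
  subst M; rewrite (glue_le_chart ac erefl) in yc.
  by have [_ [Dy ea]] := glue_le_neq yc (proper_neq LI); rewrite /= in ea; rewrite ea.
have neLM : L != M.
  by apply: contraTneq (proper_sub_trans LI (glue_le_idx ac)) => ->; rewrite properxx.
have [IM [Da ea]] := glue_le_neq ac neIM.
have [LM [Dy ey]] := glue_le_neq yc neLM.
by apply: (phi_descends hL hI hM LI IM Dy Da); rewrite -ey -ea.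
Qed.

Definition glue_Z (a : glue_sum) := Z _ (projT2 a).
Definition glue_f (a : glue_sum) := f _ (projT2 a).

Lemma glue_le_Z a c : glue_le a c ->
  (glue_Z a <-> glue_Z c) /\ (glue_Z a -> glue_f a = glue_f c).
Proof.
case=> [->|] //; case: a => [[L hL] x]; case: c => [[L1 hL1] y].
rewrite /glue_rel /glue_Z /glue_f /= => -[LL1 [Dx ->]].
have [ZZ ff] := phi_Z hL hL1 LL1 Dx.
by split; [split=> /ZZ | move=> /ff ->].
Qed.

Lemma glue_proj_Z a b : glue_proj a = glue_proj b -> glue_Z a ->
  glue_Z b /\ glue_f a = glue_f b.
Proof.
move=> /glue_proj_eq [c [ac bc]] Za.
have [ZZa ffa] := glue_le_Z ac; have [ZZb ffb] := glue_le_Z bc.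
have Zb : glue_Z b by apply/ZZb/ZZa.
by split; rewrite // ffa // ffb.
Qed.

Definition Fam := forall L, W L -> Prop.

Definition fiber (p : glue) : Fam :=
  fun L y => exists hL : P L, glue_proj (glue_pt hL y) = p.
Arguments fiber : clear implicits.

Lemma fiberE p L (hL : P L) y : fiber p L y -> glue_proj (glue_pt hL y) = p.
Proof. by move=> [hL' <-]; rewrite (proof_irrelevance _ hL hL'). Qed.

Lemma fiber_closed p L : P L -> closed (fiber p L).
Proof.
move=> hL; have [d [dm dop]] := W_metrizable hL.
apply: (closed_subsingleton dm dop) => y y' [h e] [h' e'].
by apply: (glue_proj_inj (hL := h) (hL' := h')); rewrite e e'.
Qed.

Lemma fiber_pull p L0 L : P L0 -> P L -> L0 \proper L -> forall z, D L0 L z ->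
  fiber p L (phi L0 L z) -> fiber p L0 z.
Proof.
move=> h0 hL L0L z Dz [h <-]; exists h0.
by apply: glue_proj_rel; rewrite /glue_rel /=.
Qed.

Definition open_fam (V : Fam) := forall L, P L -> open (V L).
Definition compatible_at (V : Fam) L (VL : W L -> Prop) :=
  forall L0, P L0 -> L0 \proper L -> forall x, D L0 L x -> (V L0 x <-> VL (phi L0 L x)).
Definition compatible (V : Fam) := forall L, P L -> compatible_at V (V L).
Definition zero_matches (G : Y -> Prop) L (VL : W L -> Prop) :=
  forall y, Z L y -> (VL y <-> G (f L y)).

Definition glue_image (V : Fam) : glue -> Prop :=
  quot_image (fun a : glue_sum => V _ (projT2 a)).

Lemma compatible_saturated V : compatible V -> forall a b, glue_rel a b ->
  (V _ (projT2 a) <-> V _ (projT2 b)).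
Proof.
by move=> Vc [[L0 h0] x] [[L hL] y]; rewrite /glue_rel /= => -[L0L [Dx ->]]; apply: Vc.
Qed.

Lemma glue_image_proj V : compatible V ->
  forall a, glue_image V (glue_proj a) <-> V _ (projT2 a).
Proof. by move=> Vc; apply: quot_image_proj; exact: compatible_saturated. Qed.

Lemma glue_image_open V : open_fam V -> compatible V -> open (glue_image V).
Proof.
move=> Vo Vc; apply: quot_image_open; last exact: compatible_saturated.
by move=> [L hL]; apply: Vo.
Qed.

(* Points of [W L] that a new compatible neighbourhood at [L] must contain
   ([forced]) or must avoid ([forbidden]), given [G] on the footprint and the
   families [V] already chosen on the proper subsets of [L]. *)
Definition forced (G : Y -> Prop) (V : Fam) L (y : W L) :=
  (Z L y /\ G (f L y)) \/
  exists L0 (x : W L0), P L0 /\ L0 \proper L /\ D L0 L x /\ V L0 x /\ phi L0 L x = y.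
Definition forbidden (G : Y -> Prop) (V : Fam) L (y : W L) :=
  (Z L y /\ ~ G (f L y)) \/
  exists L0 (x : W L0), P L0 /\ L0 \proper L /\ D L0 L x /\ ~ V L0 x /\ phi L0 L x = y.

Lemma compatible_below V L : P L ->
  (forall L0, P L0 -> L0 \proper L -> compatible_at V (V L0)) ->
  forall La Lb xa xb, P La -> P Lb -> La \subset Lb -> Lb \proper L ->
  D La L xa -> D Lb L xb -> phi La L xa = phi Lb L xb -> (V La xa <-> V Lb xb).
Proof.
move=> hL Vc La Lb xa xb ha hb LaLb LbL Da Db eab.
have [eLab|neLab] := eqVneq La Lb.
  subst Lb; suff -> : xa = xb by [].
  exact: (embedding_on_inj (phi_embedding ha hL LbL)).
have LaLb' : La \proper Lb by rewrite properEneq neLab LaLb.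
have [Dab <-] := phi_descends ha hb hL LaLb' LbL Da Db eab.
exact: Vc.
Qed.

(* Two representatives of one point meet at the footprint or, by tameness, come
   from the intersection of their index sets. *)
Lemma forced_not_forbidden G V L : P L ->
  (forall L0, P L0 -> L0 \proper L -> zero_matches G (V L0) /\ compatible_at V (V L0)) ->
  forall y : W L, forced G V y -> ~ forbidden G V y.
Proof.
move=> hL below y.
case=> [[Zy Gy]|[L0 [x0 [h0 [L0L [D0 [V0 <-]]]]]]]
  [[Zy' nGy]|[L1 [x1 [h1 [L1L [D1 [nV1 e1]]]]]]].
- exact: nGy.
- subst y; have [ZZ ff] := phi_Z h1 hL L1L D1; have Z1 := ZZ.1 Zy.
  by apply/nV1/((below _ h1 L1L).1 x1 Z1); rewrite -ff.
- have [ZZ ff] := phi_Z h0 hL L0L D0; have Z0 := ZZ.1 Zy'.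
  by apply: nGy; rewrite ff //; apply/((below _ h0 L0L).1 x0 Z0).
- have [[Z0 [Z1 ef]]|[h2 [x2 [D2 e2]]]] := phi_overlap h0 h1 hL L0L L1L D0 D1 (esym e1).
    apply: nV1; apply/((below _ h1 L1L).1 x1 Z1); rewrite -ef.
    exact/((below _ h0 L0L).1 x0 Z0).
  have Vc L' : P L' -> L' \proper L -> compatible_at V (V L') by move=> h' /(below _ h') [].
  have V20 := compatible_below hL Vc h2 h0 (subsetIl L0 L1) L0L D2 D0 e2.
  have V21 := compatible_below hL Vc h2 h1 (subsetIr L0 L1) L1L D2 D1
    (etrans e2 (esym e1)).
  by apply/nV1/V21/V20.
Qed.

Lemma forbidden_closed G V L : P L -> open G ->
  (forall L0, P L0 -> L0 \proper L -> open (V L0)) -> closed (@forbidden G V L).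
Proof.
move=> hL oG Vo; apply: closed_setU.
  have [O [oO OG]] := f_continuous hL oG.
  apply: (closed_ext (A := fun y => Z L y /\ ~ O y)).
    by move=> y; split=> -[Zy nG]; split=> // OGy; apply/nG/(OG _ Zy).
  by apply: closed_setI; [exact: Z_closed | exact: closed_setC].
apply: closed_fin_bigU => L0.
have [[h0 L0L]|nh] := classic (P L0 /\ L0 \proper L); last first.
  apply: (closed_ext (A := fun _ => False)); last exact: closed_set0.
  by move=> y; split=> // -[x [h0 [L0L _]]]; apply: nh.
have [O [oO OV]] := embedding_on_open_image (phi_embedding h0 hL L0L) (Vo _ h0 L0L).
apply: (closed_ext (A := fun y => (exists x, D L0 L x /\ phi L0 L x = y) /\ ~ O y)).
  move=> y; split=> [[[x [Dx <-]] nOy]|[x [_ [_ [Dx [nVx <-]]]]]].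
    by exists x; do 4 split=> //; move=> /(OV _ Dx).
  by split; [exists x | move=> /(OV _ Dx)].
by apply: closed_setI; [exact: phi_image_closed | exact: closed_setC].
Qed.

Definition source (G : Y -> Prop) (V R : Fam) L (y : W L) := forced G V y \/ R L y.
Definition obstacle (G : Y -> Prop) (V H : Fam) L (y : W L) := forbidden G V y \/ H L y.

Record fits (G : Y -> Prop) (R H V : Fam) L (VL : W L -> Prop) : Prop := Fits {
  fits_open : open VL;
  fits_zero : zero_matches G VL;
  fits_compat : compatible_at V VL;
  fits_source : forall y, R L y -> VL y;
  fits_avoid : forall y, VL y -> ~ H L y }.

Lemma fits_between G R H V L (VL : W L -> Prop) : open VL ->
  (forall y, source G V R y -> VL y) -> (forall y, VL y -> ~ obstacle G V H y) ->
  fits G R H V VL.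
Proof.
move=> oVL sub avoid; split=> //.
- move=> y Zy; split=> [VLy|Gy]; last by apply: sub; left; left.
  by apply: NNPP => nG; apply: (avoid y VLy); left; left.
- move=> L0 h0 L0L x Dx; split=> [V0x|VLx]; first by apply: sub; left; right; exists L0, x.
  by apply: NNPP => nV; apply: (avoid _ VLx); left; right; exists L0, x.
- by move=> y Ry; apply: sub; right.
- by move=> y VLy Hy; apply: (avoid y VLy); right.
Qed.

(* [R] must be contained in the neighbourhood and the closed [H] avoided by it;
   [H'] is the obstacle of the neighbourhood to be separated from, so it contains
   [R]. *)
Record admissible (G : Y -> Prop) (R H H' : Fam) : Prop := Admissible {
  adm_closed : forall L, P L -> closed (H L);
  adm_pull : forall L0 L, P L0 -> P L -> L0 \proper L -> forall z, D L0 L z ->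
    (H L (phi L0 L z) -> H L0 z) /\ (R L (phi L0 L z) -> R L0 z);
  adm_source : forall L, P L -> forall y, R L y -> ~ H L y /\ H' L y;
  adm_zero : forall L, P L -> forall y, Z L y ->
    (G (f L y) -> ~ H L y) /\ (R L y -> G (f L y)) }.

Definition separated_at (G G' : Y -> Prop) (R R' H H' V V' : Fam) L (VL VL' : W L -> Prop) :=
  fits G R H V VL /\ fits G' R' H' V' VL' /\ forall y, ~ (VL y /\ VL' y).

Lemma separated_at_sym G G' R R' H H' V V' L (VL VL' : W L -> Prop) :
  separated_at G G' R R' H H' V V' VL VL' -> separated_at G' G R' R H' H V' V VL' VL.
Proof. by move=> [fL [fL' disj]]; do 2 split=> //; move=> y [VL'y VLy]; apply: (disj y). Qed.

Section SeparationStep.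
Local Unset Implicit Arguments.
Variables (G G' : Y -> Prop) (R R' H H' V V' : Fam) (L : Idx).
Hypothesis hL : P L.
Hypothesis G_disjoint : forall y, ~ (G y /\ G' y).
Hypothesis G_admissible : admissible G R H H'.
Hypothesis below : forall L0, P L0 -> L0 \proper L ->
  separated_at G G' R R' H H' V V' (V L0) (V' L0).
Local Set Implicit Arguments.

Lemma source_not_obstacle (y : W L) : source G V R y -> ~ obstacle G V H y.
Proof.
have fits0 L0 h0 L0L := (below L0 h0 L0L).1.
case: G_admissible => _ pull source zero.
case=> [Fy|Ry] [Fby|Hy].
- apply: forced_not_forbidden hL _ y Fy Fby => L0 h0 L0L.
  by split; [exact: fits_zero (fits0 _ h0 L0L) | exact: fits_compat (fits0 _ h0 L0L)].
- case: Fy => [[Zy Gy]|[L0 [x [h0 [L0L [Dx [Vx ex]]]]]]].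
    exact: (zero L hL y Zy).1 Gy Hy.
  subst y; apply: (fits_avoid (fits0 _ h0 L0L) Vx).
  exact: (pull _ _ h0 hL L0L x Dx).1 Hy.
- case: Fby => [[Zy nGy]|[L0 [x [h0 [L0L [Dx [nVx ex]]]]]]].
    exact/nGy/(zero L hL y Zy).2.
  subst y; apply/nVx/(fits_source (fits0 _ h0 L0L)).
  exact: (pull _ _ h0 hL L0L x Dx).2 Ry.
- exact: (source L hL y Ry).1 Hy.
Qed.

Lemma source_obstacle (y : W L) : source G V R y -> obstacle G' V' H' y.
Proof.
case=> [[[Zy Gy]|[L0 [x [h0 [L0L [Dx [Vx ex]]]]]]]|Ry].
- by left; left; split=> // G'y; apply: (G_disjoint (f L y)).
- left; right; exists L0, x; do 4 split=> //.
  by move=> V'x; exact: (below L0 h0 L0L).2.2 x (conj Vx V'x).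
- by right; exact: (adm_source G_admissible hL Ry).2.
Qed.

Lemma obstacle_closed : open G -> closed (@obstacle G V H L).
Proof.
move=> oG; apply: closed_setU; last exact (adm_closed G_admissible hL).
by apply: forbidden_closed => // L0 h0 L0L; exact: fits_open (below L0 h0 L0L).1.
Qed.
End SeparationStep.

Lemma separated_step G G' R R' H H' V V' L : P L -> open G -> open G' ->
  (forall y, ~ (G y /\ G' y)) -> admissible G R H H' -> admissible G' R' H' H ->
  (forall L0, P L0 -> L0 \proper L -> separated_at G G' R R' H H' V V' (V L0) (V' L0)) ->
  exists VL VL', separated_at G G' R R' H H' V V' (L := L) VL VL'.
Proof.
move=> hL oG oG' disj adm adm' below.
have disj' y : ~ (G' y /\ G y) by move=> [G'y Gy]; apply: (disj y).
have below' L0 h0 L0L := separated_at_sym (below L0 h0 L0L).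
have [d [dm dop]] := W_metrizable hL.
have [VL [VL' [oVL [oVL' [sub [sub' [avoid [avoid' VLdisj]]]]]]]] := metric_separation dm dop
  (obstacle_closed hL adm below oG) (obstacle_closed hL adm' below' oG').
exists VL, VL'; split; [|split=> //]; apply: fits_between => // y Sy.
all: apply: sub || apply: sub'.
- exact: source_obstacle disj adm below _ Sy.
- exact: source_not_obstacle hL adm below _ Sy.
- exact: source_obstacle disj' adm' below' _ Sy.
- exact: source_not_obstacle hL adm' below' _ Sy.
Qed.

Lemma separated_at_local G G' R R' H H' (V V' U U' : Fam) L (VL VL' : W L -> Prop) :
  (forall L0, L0 \proper L -> V L0 = U L0 /\ V' L0 = U' L0) ->
  separated_at G G' R R' H H' V V' VL VL' -> separated_at G G' R R' H H' U U' VL VL'.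
Proof.
have compat_local (T T' : Fam) (TL : W L -> Prop) :
    (forall L0, L0 \proper L -> T L0 = T' L0) -> compatible_at T TL -> compatible_at T' TL.
  by move=> eT Tc L0 h0 L0L; rewrite -eT //; apply: Tc.
move=> eVU [[o z c s a] [[o' z' c' s' a'] disj]]; split; [|split=> //]; split=> //.
  by apply: compat_local c => L0 /eVU [].
by apply: compat_local c' => L0 /eVU [].
Qed.

Lemma separated_fams G G' R R' H H' : open G -> open G' ->
  (forall y, ~ (G y /\ G' y)) -> admissible G R H H' -> admissible G' R' H' H ->
  exists V V' : Fam, forall L, P L -> separated_at G G' R R' H H' V V' (V L) (V' L).
Proof.
move=> oG oG' disj adm adm'.
pose A L := ((W L -> Prop) * (W L -> Prop))%type.
pose Q (F : forall L, A L) L (a : A L) := P L ->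
  separated_at G G' R R' H H' (fun L => (F L).1) (fun L => (F L).2) a.1 a.2.
have [F QF] : exists F : forall L, A L, forall L, Q F L (F L).
  apply: (exists_fam_by_card (fun L => (fun _ => False, fun _ => False))).
    by move=> F F' L a FF' QFa hL; apply: separated_at_local (QFa hL) => L0 /FF' ->.
  move=> F L below; have [hL|nhL] := classic (P L); last by exists (F L) => /nhL.
  have [VL [VL' sep]] :=
    separated_step hL oG oG' disj adm adm' (fun L0 h0 L0L => below L0 L0L h0).
  by exists (VL, VL').
by exists (fun L => (F L).1), (fun L => (F L).2) => L; apply: QF.
Qed.

Lemma fiber_footprint p L L' (x : W L) (x' : W L') :
  fiber p L x -> fiber p L' x' -> Z L x -> f L x = f L' x'.
Proof.
move=> [h e] [h' e'] Zx.
by have [] := glue_proj_Z (a := glue_pt h x) (b := glue_pt h' x') (etrans e (esym e')) Zx.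
Qed.

Lemma fibers_admissible p q (G G' : Y -> Prop) : p <> q ->
  (forall y, ~ (G y /\ G' y)) ->
  (forall L x, fiber p L x -> Z L x -> G (f L x)) ->
  (forall L x, fiber q L x -> Z L x -> G' (f L x)) ->
  admissible G (fiber p) (fiber q) (fiber p).
Proof.
move=> npq disj Gp Gq; split=> [L hL|L0 L h0 hL L0L z Dz|L hL y py|L hL y Zy].
- exact: fiber_closed.
- by split; apply: fiber_pull.
- by split=> // -[h qy]; apply/npq; rewrite -qy (fiberE h py).
- by split=> [Gy qy|py]; [apply: (disj (f L y)); split=> //; apply: Gq | apply: Gp].
Qed.

Lemma footprints_separated p q : p <> q ->
  exists G G' : Y -> Prop, open G /\ open G' /\ (forall y, ~ (G y /\ G' y)) /\
    (forall L x, fiber p L x -> Z L x -> G (f L x)) /\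
    (forall L x, fiber q L x -> Z L x -> G' (f L x)).
Proof.
move=> npq.
pose zero_image r y := exists L x, fiber r L x /\ Z L x /\ f L x = y.
have zero_image_uniq r y y' : zero_image r y -> zero_image r y' -> y = y'.
  by move=> [L [x [rx [Zx <-]]]] [L' [x' [rx' [_ <-]]]]; exact: fiber_footprint rx rx' Zx.
have zero_image_disj y : ~ (zero_image p y /\ zero_image q y).
  move=> [[L [x [[h ex] [Zx <-]]]] [L' [x' [[h' ex'] [Zx' fx']]]]].
  by apply: npq; rewrite -ex -ex'; exact: f_glue Zx Zx' (esym fx').
have [G [G' [oG [oG' [disj [Gp Gq]]]]]] := hausdorff_separate_subsingletons
  Y_hausdorff (zero_image_uniq p) (zero_image_uniq q) zero_image_disj.
exists G, G'; do 3 split=> //.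
by split=> L x rx Zx; [apply: Gp | apply: Gq]; exists L, x.
Qed.

Theorem glue_hausdorff : hausdorff glue.
Proof.
move=> p q npq.
have [G [G' [oG [oG' [disj [Gp Gq]]]]]] := footprints_separated npq.
have [V [V' sep]] := separated_fams oG oG' disj
  (fibers_admissible npq disj Gp Gq)
  (fibers_admissible (nesym npq) (fun y GG' => disj y (conj GG'.2 GG'.1)) Gq Gp).
have Vc : compatible V by move=> L hL; exact: fits_compat (sep L hL).1.
have V'c : compatible V' by move=> L hL; exact: fits_compat (sep L hL).2.1.
exists (glue_image V), (glue_image V').
split; first by apply: glue_image_open Vc => L hL; exact: fits_open (sep L hL).1.
split; first by apply: glue_image_open V'c => L hL; exact: fits_open (sep L hL).2.1.
have [[[L hL] x] ep] := quot_proj_surj p.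
have [[[L' hL'] x'] eq] := quot_proj_surj q.
split.
  rewrite ep; apply/(glue_image_proj Vc).
  exact (fits_source (sep L hL).1 (ex_intro _ hL (esym ep))).
split.
  rewrite eq; apply/(glue_image_proj V'c).
  exact (fits_source (sep L' hL').2.1 (ex_intro _ hL' (esym eq))).
move=> z [Vz V'z]; have [[[M hM] m] ez] := quot_proj_surj z.
move: Vz V'z; rewrite ez => /(glue_image_proj Vc) Vm /(glue_image_proj V'c) V'm.
exact: (sep M hM).2.2 m (conj Vm V'm).
Qed.

Section ChartNeighbourhood.
Variables (I : Idx) (hI : P I) (O : W I -> Prop).
Hypothesis O_open : open O.

Definition reaches : Fam := fun L y =>
  exists2 x, O x & forall hL : P L, glue_proj (glue_pt hL y) = glue_proj (glue_pt hI x).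
Arguments reaches : clear implicits.

Lemma reaches_chart y : reaches I y <-> O y.
Proof.
split=> [[x Ox /(_ hI) /glue_proj_inj ->] //|Oy].
by exists y => // hI'; rewrite (proof_irrelevance _ hI' hI).
Qed.

Lemma reaches_below L y : P L -> L \proper I -> reaches L y <-> D L I y /\ O (phi L I y).
Proof.
move=> hL LI; split=> [[x Ox /(_ hL) /glue_proj_descends [] // Dy ->] //|[Dy Oy]].
exists (phi L I y) => // hL'; apply: glue_proj_rel.
by rewrite /glue_rel /=.
Qed.

Definition unreached : Fam := fun L y => L \subset I /\ ~ reaches L y.
Arguments unreached : clear implicits.

Lemma unreached_closed L : P L -> closed (unreached L).
Proof.
move=> hL; have [LI|nLI] := boolP (L \subset I); last first.
  by apply: closed_ext (closed_set0 _) => y; split=> // -[LI _]; rewrite LI in nLI.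
have [eLI|neLI] := eqVneq L I.
  subst L; apply: closed_ext (closed_setC O_open) => y.
  by rewrite /unreached reaches_chart; split=> [nO|[]] //; split.
have LI' : L \proper I by rewrite properEneq neLI LI.
have [O' [oO' O'O]] := embedding_on_open_preimage (phi_embedding hL hI LI') O_open.
apply: (closed_ext (A := fun y => ~ (D L I y /\ O' y))).
  move=> y; rewrite /unreached (reaches_below _ hL LI'); split=> [nDO|[_ nDO] [Dy O'y]].
    by split=> // -[Dy Oy]; apply: nDO; split=> //; apply/O'O.
  by apply: nDO; split=> //; apply/O'O.
by apply: closed_setC; apply: open_setI => //; exact: D_open.
Qed.

Lemma unreached_admissible x0 (G : Y -> Prop) : O x0 ->
  (forall x, Z I x -> (G (f I x) <-> O x)) ->
  (forall y, G y -> exists x, Z I x /\ f I x = y) ->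
  admissible G (fiber (glue_proj (glue_pt hI x0))) unreached (fun _ _ => True).
Proof.
move=> Ox0 GO Gsurj; split=> [L hL|L0 L h0 hL L0L z Dz|L hL y x0y|L hL y Zy].
- exact: unreached_closed.
- split; last exact: fiber_pull.
  move=> [LI nr]; split; first exact: subset_trans (proper_sub L0L) LI.
  move=> [x Ox e]; apply: nr; exists x => // hL'; rewrite -(e h0).
  by apply/esym/glue_proj_rel; rewrite /glue_rel /=.
- by split=> // -[_]; apply; exists x0 => // hL'; rewrite (fiberE hL' x0y).
- split=> [Gy [_]|x0y]; last first.
    have [Zx0 ef] := glue_proj_Z (fiberE hL x0y) Zy.
    by rewrite /glue_f /= in ef; rewrite ef; apply/(GO _ Zx0).
  have [x [Zx fx]] := Gsurj _ Gy.
  apply; exists x => [|hL']; first by apply/(GO _ Zx); rewrite fx.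
  by apply: f_glue; rewrite ?fx.
Qed.

Lemma compatible_nbhd x0 : O x0 ->
  exists V : Fam, open_fam V /\ compatible V /\ V I x0 /\ forall y, V I y -> O y.
Proof.
move=> Ox0; have [G [oG [GO Gsurj]]] := f_open hI O_open.
have adm' : admissible (fun _ => False) (fun _ _ => False) (fun _ _ => True) unreached.
  by split=> // L hL; exact: closed_setT.
have [V [V' sep]] := separated_fams oG (open_set0 _) (fun y GF => GF.2)
  (unreached_admissible Ox0 GO Gsurj) adm'.
exists V; split; first by move=> L hL; exact: fits_open (sep L hL).1.
split; first by move=> L hL; exact: fits_compat (sep L hL).1.
split; first exact (fits_source (sep I hI).1 (ex_intro _ hI erefl)).
move=> y VIy; apply/reaches_chart; apply: NNPP => nr.
exact (fits_avoid (sep I hI).1 VIy (conj (subxx I) nr)).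
Qed.
End ChartNeighbourhood.

Theorem glue_proj_embedding I (hI : P I) : embedding (fun x : W I => glue_proj (glue_pt hI x)).
Proof.
set F := fun x : W I => glue_proj (glue_pt hI x).
pose g (y : subspace (image_of F)) : W I :=
  proj1_sig (constructive_indefinite_description _ (proj2_sig y)).
have gK y : F (g y) = proj1_sig y :=
  proj2_sig (constructive_indefinite_description _ (proj2_sig y)).
exists g; split.
  by move=> x; apply: (glue_proj_inj (hL := hI) (hL' := hI)); exact: (gK (corestr F x)).
split.
  move=> y; apply: eq_sig_hprop => /= [? ? ?|]; first exact: proof_irrelevance.
  exact: gK.
split.
  move=> V [Q [oQ VQ]]; apply: open_ext (oQ (exist P I hI)) => x.
  by rewrite VQ.
move=> O oO.
pose Q (q : glue) := exists V : Fam, open_fam V /\ compatible V /\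
  (forall y, V I y -> O y) /\ glue_image V q.
exists Q; split.
  apply: open_nbhs => q [V [Vo [Vc [VO Vq]]]].
  by exists (glue_image V); split; [exact: glue_image_open | split=> // q' ?; exists V].
move=> y; split=> [/(compatible_nbhd hI oO) [V [Vo [Vc [Vgy VO]]]]|[V [_ [Vc [VO]]]]].
  by exists V; do 3 split=> //; rewrite -gK; apply/(glue_image_proj Vc).
by rewrite -gK => /(glue_image_proj Vc); apply: VO.
Qed.

End Gluing.

(** * Tame topological Kuranishi atlases *)

Section TameAtlas.
Variables (X : Top) (N : nat) (K : KData X N).
Hypothesis K_tame : tame_top_atlas K.
Implicit Types I J L M H : {set 'I_N}.

Lemma atlas_chart I : IK K I -> chart_ok K I.
Proof. by case: K_tame => -[_ [_ [chart _]]] _; apply: chart. Qed.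
Lemma atlas_change I J : IK K I -> IK K J -> I \proper J -> coord_change_ok K I J.
Proof. by case: K_tame => -[_ [_ [_ [change _]]]] _; apply: change. Qed.
Lemma atlas_cocycle I J L : IK K I -> IK K J -> IK K L -> I \proper J -> J \proper L ->
  cocycle_ok K I J L.
Proof. by case: K_tame => -[_ [_ [_ [_ cocycle]]]] _; apply: cocycle. Qed.
Lemma footprint_open i : open (Fp K i).
Proof. by case: K_tame => -[Fopen _] _. Qed.

Lemma filtration_closed I J : IK K J -> I \subset J -> closed (EF K I J).
Proof. by case: K_tame => _ [[EFclosed _] _]; apply: EFclosed. Qed.
Lemma filtration_top J e : IK K J -> EF K J J e.
Proof. by case: K_tame => _ [[_ [EFtop _]] _] hJ; apply: EFtop. Qed.
Lemma filtration_bot J e : IK K J -> (EF K set0 J e <-> exists x, e = zr K x).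
Proof. by case: K_tame => _ [[_ [_ [EFbot _]]] _] hJ; apply: EFbot. Qed.
Lemma filtration_change I J L : IK K J -> IK K L -> I \subset J -> J \proper L ->
  forall f : E K L,
    (exists e, UU K J L (pr K e) /\ EF K I J e /\ Phi K J L e = f) <->
    (EF K I L f /\ exists x, UU K J L x /\ phi K J L x = pr K f).
Proof. by case: K_tame => _ [[_ [_ [_ [EFchange _]]]] _]; apply: EFchange. Qed.
Lemma filtration_meet I H J : IK K J -> I \subset J -> H \subset J ->
  forall e, EF K I J e /\ EF K H J e <-> EF K (I :&: H) J e.
Proof. by case: K_tame => _ [[_ [_ [_ [_ [EFmeet _]]]]] _]; apply: EFmeet. Qed.
Lemma filtration_section I J : IK K I -> IK K J -> I \proper J ->
  forall x, UU K I J x -> EF K I J (sc K (phi K I J x)).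
Proof.
by case: K_tame => _ [[_ [_ [_ [_ [_ EFsc]]]]] _] hI hJ IJ; have [] := EFsc _ _ hI hJ IJ.
Qed.

Lemma UU_union I J L : IK K I -> IK K J -> IK K L -> I \proper J -> I \proper L ->
  forall x, UU K I J x -> UU K I L x -> IK K (J :|: L) /\ UU K I (J :|: L) x.
Proof.
move=> hI hJ hL IJ IL x UJx ULx.
have IJL : I \proper J :|: L := proper_sub_trans IJ (subsetUl J L).
case: K_tame => _ [_ [union _]].
have := (union _ _ _ hI hJ hL (proper_sub IJ) (proper_sub IL) x).1.
by rewrite /Uext !(negbTE (proper_neq _)) //; apply.
Qed.

Lemma tame_image I J L : IK K I -> IK K J -> IK K L -> I \proper J -> J \proper L ->
  forall y : U K J,
    (exists x, UU K I L x /\ UU K I J x /\ phi K I J x = y) <->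
    (UU K J L y /\ EF K I J (sc K y)).
Proof.
move=> hI hJ hL IJ JL y; case: K_tame => _ [_ [_ image]].
have := image _ _ _ hI hJ hL IJ (proper_sub JL) y.
rewrite /Uext (negbTE (proper_neq JL)) (negbTE (proper_neq (proper_trans IJ JL))).
move=> [img img']; split=> [[x [ULx UJx]]|[ULy EFy]].
  by have [[_ ?] ?] := img (ex_intro _ x (conj (conj hL ULx) UJx)).
by have [x [[_ ?] ?]] := img' (conj (conj hL ULy) EFy); exists x.
Qed.

Lemma phi_image_filtration I J : IK K I -> IK K J -> I \proper J -> forall y : U K J,
  (exists x, UU K I J x /\ phi K I J x = y) <-> EF K I J (sc K y).
Proof.
move=> hI hJ IJ y; case: K_tame => _ [_ [_ image]].
have := image _ _ _ hI hJ hJ IJ (subxx J) y.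
rewrite /Uext eqxx (negbTE (proper_neq IJ)) => -[img img']; split=> [[x [UJx ex]]|EFy].
  by apply: (img _).2; exists x; do 2 split.
by have [x [_ ?]] := img' (conj (conj hJ Logic.I) EFy); exists x.
Qed.

Section Chart.
Variables (I : {set 'I_N}) (hI : IK K I).
Let chart := atlas_chart hI.
Lemma U_metrizable : metrizable (U K I).
Proof. by case: chart => _ [_ []]. Qed.
Lemma E_metrizable : metrizable (E K I).
Proof. by case: chart => _ [_ [_ [_ [_ []]]]]. Qed.
Lemma pr_continuous : continuous (pr K (I:=I)).
Proof. by case: chart => _ [_ [_ [_ [_ [_ []]]]]]. Qed.
Lemma zr_continuous : continuous (zr K (I:=I)).
Proof. by case: chart => _ [_ [_ [_ [_ [_ [_ []]]]]]]. Qed.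
Lemma sc_continuous : continuous (sc K (I:=I)).
Proof. by case: chart => _ [_ [_ [_ [_ [_ [_ [_ []]]]]]]]. Qed.
Lemma pr_zr (x : U K I) : pr K (zr K x) = x.
Proof. by case: chart => _ [_ [_ [_ [_ [_ [_ [_ [_ []]]]]]]]]. Qed.
Lemma pr_sc (x : U K I) : pr K (sc K x) = x.
Proof. by case: chart => _ [_ [_ [_ [_ [_ [_ [_ [_ [_ []]]]]]]]]]. Qed.
Lemma psi_embedding : embedding_on (psi K (I:=I)) (@Z _ _ K I).
Proof. by case: chart => _ [_ [_ [_ [_ [_ [_ [_ [_ [_ [_ []]]]]]]]]]]. Qed.
Lemma footprint_psi y : FI K I y <-> exists x : U K I, Z x /\ psi K x = y.
Proof. by case: chart => _ [_ [_ [_ [_ [_ [_ [_ [_ [_ [_ [_ ]]]]]]]]]]]. Qed.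
End Chart.

Section CoordinateChange.
Variables (I J : {set 'I_N}) (hI : IK K I) (hJ : IK K J) (IJ : I \proper J).
Let change := atlas_change hI hJ IJ.
Lemma UU_open : open (UU K I J).
Proof. by case: change. Qed.
Lemma UU_zero x : UU K I J x /\ Z x <-> Z x /\ FI K I (psi K x) /\ FI K J (psi K x).
Proof. by case: change => _ []. Qed.
Lemma Phi_embedding : embedding_on (Phi K I J) (fun e => UU K I J (pr K e)).
Proof. by case: change => _ [_ []]. Qed.
Lemma phi_embedding : embedding_on (phi K I J) (UU K I J).
Proof. by case: change => _ [_ [_ []]]. Qed.
Lemma pr_Phi e : UU K I J (pr K e) -> pr K (Phi K I J e) = phi K I J (pr K e).
Proof. by case: change => _ [_ [_ [_ [prPhi _]]]]; apply: prPhi. Qed.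
Lemma zr_phi x : UU K I J x -> zr K (phi K I J x) = Phi K I J (zr K x).
Proof. by case: change => _ [_ [_ [_ [_ [zrphi _]]]]]; apply: zrphi. Qed.
Lemma sc_phi x : UU K I J x -> sc K (phi K I J x) = Phi K I J (sc K x).
Proof. by case: change => _ [_ [_ [_ [_ [_ [scphi _]]]]]]; apply: scphi. Qed.
Lemma phi_psi x : UU K I J x -> Z x -> Z (phi K I J x) /\ psi K (phi K I J x) = psi K x.
Proof. by case: change => _ [_ [_ [_ [_ [_ [_ phipsi]]]]]]; apply: phipsi. Qed.
Lemma Phi_inj e e' : UU K I J (pr K e) -> UU K I J (pr K e') ->
  Phi K I J e = Phi K I J e' -> e = e'.
Proof. exact: (embedding_on_inj Phi_embedding). Qed.
Lemma phi_inj x x' : UU K I J x -> UU K I J x' -> phi K I J x = phi K I J x' -> x = x'.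
Proof. exact: (embedding_on_inj phi_embedding). Qed.
End CoordinateChange.

Lemma IK_sub I J : IK K J -> I \subset J -> I != set0 -> IK K I.
Proof. by move=> [_ [x FJx]] IJ nI0; split=> //; exists x => i iI; apply/FJx/(subsetP IJ). Qed.

Lemma footprints_open L : open (FI K L).
Proof.
apply: (open_ext (A := fun y => forall i, i \in enum L -> Fp K i y)).
  by move=> y; split=> FLy i; rewrite ?mem_enum => iL; apply: FLy; rewrite ?mem_enum.
by apply: open_fin_bigI => i; exact: footprint_open.
Qed.

Lemma phi_image_closed L L' : IK K L -> IK K L' -> L \proper L' ->
  closed (fun y : U K L' => exists x, UU K L L' x /\ phi K L L' x = y).
Proof.
move=> hL hL' LL'.
apply: (closed_ext (A := fun y => EF K L L' (sc K y))) => [y|].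
  by rewrite (phi_image_filtration hL hL' LL').
exact: closed_preimage (sc_continuous hL') (filtration_closed hL' (proper_sub LL')).
Qed.

Lemma phi_cocycle L0 L1 L2 : IK K L0 -> IK K L1 -> IK K L2 ->
  L0 \proper L1 -> L1 \proper L2 -> forall x, UU K L0 L1 x -> UU K L1 L2 (phi K L0 L1 x) ->
  UU K L0 L2 x /\ phi K L1 L2 (phi K L0 L1 x) = phi K L0 L2 x.
Proof.
move=> h0 h1 h2 L01 L12 x U01x U12x.
have [PhiPhi UU02] := atlas_cocycle h0 h1 h2 L01 L12.
have U02x : UU K L0 L2 x by apply: UU02; split.
split=> //.
have pr01 : pr K (Phi K L0 L1 (zr K x)) = phi K L0 L1 x.
  by rewrite (pr_Phi h0 h1 L01) (pr_zr h0).
have := PhiPhi (zr K x); rewrite (pr_zr h0) => /(_ (conj (conj U01x U12x) U02x)).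
move=> /(f_equal (pr K)).
by rewrite (pr_Phi h1 h2 L12) ?pr01 // (pr_Phi h0 h2 (proper_trans L01 L12)) (pr_zr h0).
Qed.

Lemma UU_push L L1 M : IK K L -> IK K L1 -> IK K M ->
  L \proper L1 -> L1 \proper M -> forall x, UU K L L1 x -> UU K L M x ->
  UU K L1 M (phi K L L1 x).
Proof.
move=> hL h1 hM LL1 L1M x U1x UMx.
by have [] := (tame_image hL h1 hM LL1 L1M _).1 (ex_intro _ x (conj UMx (conj U1x erefl))).
Qed.

(* The section over a point in the image of [phi_{L1 M}] and [phi_{L M}] lies in
   [E_{L M}]; tameness then pulls the point back to [U_{L L1}]. *)
Lemma phi_descends L L1 M : IK K L -> IK K L1 -> IK K M ->
  L \proper L1 -> L1 \proper M -> forall y a, UU K L M y -> UU K L1 M a ->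
  phi K L M y = phi K L1 M a -> UU K L L1 y /\ phi K L L1 y = a.
Proof.
move=> hL h1 hM LL1 L1M y a UMy U1a e.
have LM := proper_trans LL1 L1M.
have EFa := filtration_section hL hM LM UMy.
rewrite e (sc_phi h1 hM L1M U1a) in EFa.
have U1sa : UU K L1 M (pr K (sc K a)) by rewrite (pr_sc h1).
have prPhia : phi K L1 M a = pr K (Phi K L1 M (sc K a)).
  by rewrite (pr_Phi h1 hM L1M U1sa) (pr_sc h1).
have [e' [Ue' [EFe' ee']]] := (filtration_change h1 hM (proper_sub LL1) L1M _).2
  (conj EFa (ex_intro _ a (conj U1a prPhia))).
rewrite (Phi_inj h1 hM L1M Ue' U1sa ee') in EFe'.
have [x [UMx [U1x ex]]] := (tame_image hL h1 hM LL1 L1M a).2 (conj U1a EFe').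
have U1phix : UU K L1 M (phi K L L1 x) by rewrite ex.
have [_ phi2] := phi_cocycle hL h1 hM LL1 L1M U1x U1phix.
have exy : x = y by apply: (phi_inj hL hM LM UMx UMy); rewrite -phi2 ex e.
by subst x.
Qed.

Lemma filtration_meet_cases L0 L1 L : IK K L0 -> IK K L1 -> IK K L ->
  L0 \proper L -> L1 \proper L -> forall g : E K L, EF K L0 L g -> EF K L1 L g ->
  (L0 :&: L1 = set0 /\ exists x, g = zr K x) \/ (IK K (L0 :&: L1) /\ EF K (L0 :&: L1) L g).
Proof.
move=> h0 h1 hL L0L L1L g EF0 EF1.
have EF2 := (filtration_meet hL (proper_sub L0L) (proper_sub L1L) g).1 (conj EF0 EF1).
have [e0|ne0] := eqVneq (L0 :&: L1) set0.
  by left; split=> //; rewrite e0 in EF2; exact: (filtration_bot g hL).1 EF2.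
by right; split=> //; exact: IK_sub h0 (subsetIl _ _) ne0.
Qed.

Lemma phi_zero L L' : IK K L -> IK K L' -> L \proper L' -> forall x, UU K L L' x ->
  (Z (phi K L L' x) <-> Z x) /\ (Z x -> psi K (phi K L L' x) = psi K x).
Proof.
move=> hL hL' LL' x Ux; split; last by move=> Zx; exact: (phi_psi hL hL' LL' Ux Zx).2.
split; last by move=> Zx; exact: (phi_psi hL hL' LL' Ux Zx).1.
rewrite /Z (sc_phi hL hL' LL' Ux) (zr_phi hL hL' LL' Ux) => ePhi.
by apply: (Phi_inj hL hL' LL') => //; rewrite ?(pr_sc hL) ?(pr_zr hL).
Qed.

Lemma phi_overlap L0 L1 L : IK K L0 -> IK K L1 -> IK K L ->
  L0 \proper L -> L1 \proper L -> forall x0 x1, UU K L0 L x0 -> UU K L1 L x1 ->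
  phi K L0 L x0 = phi K L1 L x1 ->
  (Z x0 /\ Z x1 /\ psi K x0 = psi K x1) \/
  (IK K (L0 :&: L1) /\ exists x2, UU K (L0 :&: L1) L x2 /\
      phi K (L0 :&: L1) L x2 = phi K L0 L x0).
Proof.
move=> h0 h1 hL L0L L1L x0 x1 U0 U1 e.
have EF0 := filtration_section h0 hL L0L U0.
have EF1 := filtration_section h1 hL L1L U1; rewrite -e in EF1.
case: (filtration_meet_cases h0 h1 hL L0L L1L EF0 EF1) => [[_ [z ez]]|[h2 EF2]].
  have ey : phi K L0 L x0 = z by have := f_equal (pr K) ez; rewrite (pr_sc hL) (pr_zr hL).
  have Zy : Z (phi K L0 L x0) by rewrite /Z ez ey.
  have [ZZ0 ff0] := phi_zero h0 hL L0L U0.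
  have [ZZ1 ff1] := phi_zero h1 hL L1L U1.
  have Z0 : Z x0 by apply/ZZ0.
  have Z1 : Z x1 by apply/ZZ1; rewrite -e.
  by left; do 2 split=> //; rewrite -ff0 // -ff1 // e.
right; split=> //.
have L2L : L0 :&: L1 \proper L := sub_proper_trans (subsetIl L0 L1) L0L.
by have [x2 [U2 e2]] := (phi_image_filtration h2 hL L2L _).2 EF2; exists x2.
Qed.

Lemma zero_closed L : IK K L -> closed (@Z _ _ K L).
Proof.
move=> hL; exact: closed_equalizer (metrizable_hausdorff (E_metrizable hL))
  (sc_continuous hL) (zr_continuous hL).
Qed.

Lemma psi_zero_continuous L : IK K L -> forall G : X -> Prop, open G ->
  exists O : U K L -> Prop, open O /\ forall x, Z x -> (O x <-> G (psi K x)).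
Proof. by move=> hL G oG; apply: (embedding_on_open_preimage (psi_embedding hL)). Qed.

Lemma psi_zero_open L : IK K L -> forall O : U K L -> Prop, open O ->
  exists G : X -> Prop, open G /\ (forall x, Z x -> (G (psi K x) <-> O x)) /\
    (forall y, G y -> exists x : U K L, Z x /\ psi K x = y).
Proof.
move=> hL O oO; have [V [oV VO]] := embedding_on_open_image (psi_embedding hL) oO.
exists (fun y => V y /\ FI K L y).
split; first by apply: open_setI => //; exact: footprints_open.
split=> [x Zx|y [_ /(footprint_psi hL) //]].
split=> [[/(VO _ Zx) //]|Ox]; split; first exact/(VO _ Zx).
by apply/(footprint_psi hL); exists x.
Qed.

Lemma zero_change L M : IK K L -> IK K M -> L \proper M ->
  forall (c : U K L) (m : U K M), Z c -> Z m -> psi K m = psi K c ->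
  UU K L M c /\ phi K L M c = m.
Proof.
move=> hL hM LM c m Zc Zm emc.
have FLc : FI K L (psi K c) by apply/(footprint_psi hL); exists c.
have FMc : FI K M (psi K c) by rewrite -emc; apply/(footprint_psi hM); exists m.
have [Uc _] := (UU_zero hL hM LM c).2 (conj Zc (conj FLc FMc)).
have [Zphic ephic] := phi_psi hL hM LM Uc Zc.
split=> //; apply: (embedding_on_inj (psi_embedding hM)) => //.
by rewrite ephic emc.
Qed.

Lemma zero_union L L' (hL : IK K L) (hL' : IK K L') (a : U K L) (b : U K L') :
  Z a -> Z b -> psi K a = psi K b ->
  exists (hM : IK K (L :|: L')) (m : U K (L :|: L')), Z m /\ psi K m = psi K a.
Proof.
move=> Za Zb eab.
have FLa : FI K L (psi K a) by apply/(footprint_psi hL); exists a.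
have FL'a : FI K L' (psi K a) by rewrite eab; apply/(footprint_psi hL'); exists b.
have FMa : FI K (L :|: L') (psi K a).
  by move=> i; rewrite inE => /orP [iL|iL']; [apply: FLa | apply: FL'a].
have hM : IK K (L :|: L').
  split; last by exists (psi K a).
  by have [i iL] := set0Pn _ hL.1; apply/set0Pn; exists i; rewrite inE iL.
by have [m Zm] := (footprint_psi hM _).1 FMa; exists hM, m.
Qed.

Local Notation Uglue := (@glue_proj N (IK K) (U K) (UU K) (phi K)).

Lemma Uglue_zero_sub L M (hL : IK K L) (hM : IK K M) (c : U K L) (m : U K M) :
  Z c -> Z m -> L \subset M -> psi K m = psi K c ->
  Uglue (glue_pt hL c) = Uglue (glue_pt hM m).
Proof.
move=> Zc Zm LM emc.
have [eLM|neLM] := eqVneq L M.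
  subst M; rewrite (proof_irrelevance _ hM hL); congr (Uglue (glue_pt hL _)).
  exact: (embedding_on_inj (psi_embedding hL)).
have LM' : L \proper M by rewrite properEneq neLM LM.
have [Uc ec] := zero_change hL hM LM' Zc Zm emc.
by apply/quot_proj_eq/rst_step; rewrite /glue_rel /= ec.
Qed.

Lemma psi_glue L L' (hL : IK K L) (hL' : IK K L') (a : U K L) (b : U K L') :
  Z a -> Z b -> psi K a = psi K b -> Uglue (glue_pt hL a) = Uglue (glue_pt hL' b).
Proof.
move=> Za Zb eab; have [hM [m [Zm ema]]] := zero_union hL hL' Za Zb eab.
rewrite (Uglue_zero_sub hL hM Za Zm (subsetUl _ _) ema).
by rewrite (Uglue_zero_sub hL' hM Zb Zm (subsetUr _ _)) // ema.
Qed.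

Definition DE L L' (e : E K L) := UU K L L' (pr K e).
Definition zeroE L (e : E K L) := e = zr K (pr K e) /\ Z (pr K e).
Definition footE L (e : E K L) := psi K (pr K e).
Arguments DE : clear implicits.

Lemma DE_open L L' : IK K L -> IK K L' -> L \proper L' -> open (DE L L').
Proof. by move=> hL hL' LL'; exact: (pr_continuous hL) (UU_open hL hL' LL'). Qed.

Lemma Phi_image_closed L L' : IK K L -> IK K L' -> L \proper L' ->
  closed (fun g : E K L' => exists e, DE L L' e /\ Phi K L L' e = g).
Proof.
move=> hL hL' LL'.
apply: (closed_ext (A := fun g => EF K L L' g /\ EF K L L' (sc K (pr K g)))).
  move=> g; have img := filtration_change hL hL' (subxx L) LL' g.
  rewrite -(phi_image_filtration hL hL' LL' (pr K g)); split.
    by move=> /img [e [De [_ ee]]]; exists e.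
  by move=> [e [De ee]]; apply/img; exists e; do 2 split=> //; exact: filtration_top.
have EFclosed := filtration_closed hL' (proper_sub LL').
apply: closed_setI EFclosed (closed_preimage _ EFclosed).
exact: continuous_comp (pr_continuous hL') (sc_continuous hL').
Qed.

Lemma Phi_cocycle L0 L1 L2 : IK K L0 -> IK K L1 -> IK K L2 ->
  L0 \proper L1 -> L1 \proper L2 -> forall e, DE L0 L1 e -> DE L1 L2 (Phi K L0 L1 e) ->
  DE L0 L2 e /\ Phi K L1 L2 (Phi K L0 L1 e) = Phi K L0 L2 e.
Proof.
move=> h0 h1 h2 L01 L12 e D01 D12.
rewrite /DE (pr_Phi h0 h1 L01 D01) in D12.
have [D02 _] := phi_cocycle h0 h1 h2 L01 L12 D01 D12.
by split=> //; have [PhiPhi _] := atlas_cocycle h0 h1 h2 L01 L12; apply: PhiPhi.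
Qed.

Lemma DE_union L L1 L2 : IK K L -> IK K L1 -> IK K L2 -> L \proper L1 -> L \proper L2 ->
  forall e, DE L L1 e -> DE L L2 e -> IK K (L1 :|: L2) /\ DE L (L1 :|: L2) e.
Proof. by move=> hL h1 h2 LL1 LL2 e; exact: UU_union. Qed.

Lemma DE_push L L1 M : IK K L -> IK K L1 -> IK K M ->
  L \proper L1 -> L1 \proper M -> forall e, DE L L1 e -> DE L M e ->
  DE L1 M (Phi K L L1 e).
Proof.
by move=> hL h1 hM LL1 L1M e D1 DM; rewrite /DE (pr_Phi hL h1 LL1 D1); exact: UU_push.
Qed.

Lemma Phi_descends L L1 M : IK K L -> IK K L1 -> IK K M ->
  L \proper L1 -> L1 \proper M -> forall y a, DE L M y -> DE L1 M a ->
  Phi K L M y = Phi K L1 M a -> DE L L1 y /\ Phi K L L1 y = a.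
Proof.
move=> hL h1 hM LL1 L1M y a DMy D1a e.
have LM := proper_trans LL1 L1M.
have e' : phi K L M (pr K y) = phi K L1 M (pr K a).
  by rewrite -(pr_Phi hL hM LM DMy) -(pr_Phi h1 hM L1M D1a) e.
have [D1y ey] := phi_descends hL h1 hM LL1 L1M DMy D1a e'.
split=> //.
have DPhi : DE L1 M (Phi K L L1 y) by rewrite /DE (pr_Phi hL h1 LL1 D1y) ey.
apply: (Phi_inj h1 hM L1M) => //.
by have [_ ->] := Phi_cocycle hL h1 hM LL1 L1M D1y DPhi.
Qed.

Lemma zeroE_Phi L0 L (h0 : IK K L0) (hL : IK K L) (L0L : L0 \proper L) (e0 : E K L0) :
  DE L0 L e0 -> Z (pr K (Phi K L0 L e0)) -> (exists z, Phi K L0 L e0 = zr K z) -> zeroE e0.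
Proof.
move=> D0 Zg [z ez].
have prg : pr K (Phi K L0 L e0) = phi K L0 L (pr K e0) := pr_Phi h0 hL L0L D0.
have ez' : z = phi K L0 L (pr K e0) by have := f_equal (pr K) ez; rewrite (pr_zr hL) prg.
split; last by apply/((phi_zero h0 hL L0L D0).1); rewrite -prg.
apply: (Phi_inj h0 hL L0L) => //; first by rewrite /DE (pr_zr h0).
by rewrite ez ez' (zr_phi h0 hL L0L D0).
Qed.

Lemma Phi_overlap L0 L1 L : IK K L0 -> IK K L1 -> IK K L ->
  L0 \proper L -> L1 \proper L -> forall e0 e1, DE L0 L e0 -> DE L1 L e1 ->
  Phi K L0 L e0 = Phi K L1 L e1 ->
  (zeroE e0 /\ zeroE e1 /\ footE e0 = footE e1) \/
  (IK K (L0 :&: L1) /\ exists e2, DE (L0 :&: L1) L e2 /\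
     Phi K (L0 :&: L1) L e2 = Phi K L0 L e0).
Proof.
move=> h0 h1 hL L0L L1L e0 e1 D0 D1 ee.
set g := Phi K L0 L e0.
have EFg_change I (hI : IK K I) (IL : I \proper L) e : DE I L e -> EF K I L (Phi K I L e).
  move=> De; apply: (proj1 ((filtration_change hI hL (subxx I) IL _).1 _)).
  by exists e; do 2 split=> //; exact: filtration_top.
have EF0 : EF K L0 L g := EFg_change _ h0 L0L _ D0.
have EF1 : EF K L1 L g by rewrite /g ee; exact: EFg_change.
have pr0 : pr K g = phi K L0 L (pr K e0) := pr_Phi h0 hL L0L D0.
have pr1 : pr K g = phi K L1 L (pr K e1) by rewrite /g ee; exact: (pr_Phi h1 hL L1L D1).
have s0 : EF K L0 L (sc K (pr K g)) by rewrite pr0; exact: filtration_section.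
have s1 : EF K L1 L (sc K (pr K g)) by rewrite pr1; exact: filtration_section.
have s2 := (filtration_meet hL (proper_sub L0L) (proper_sub L1L) _).1 (conj s0 s1).
case: (filtration_meet_cases h0 h1 hL L0L L1L EF0 EF1) => [[e2 gz]|[h2 EF2]].
  rewrite e2 in s2; have [w ew] := (filtration_bot _ hL).1 s2.
  have epw : pr K g = w by have := f_equal (pr K) ew; rewrite (pr_sc hL) (pr_zr hL).
  have Zg : Z (pr K g) by rewrite /Z ew -epw.
  have Z0 : zeroE e0 := zeroE_Phi h0 hL L0L D0 Zg gz.
  have Z1 : zeroE e1 by apply: (zeroE_Phi h1 hL L1L D1); rewrite -ee.
  left; do 2 split=> //.
  have psi0 := (phi_psi h0 hL L0L D0 Z0.2).2.
  have psi1 := (phi_psi h1 hL L1L D1 Z1.2).2.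
  by rewrite /footE -psi0 -psi1 -pr0 -pr1.
right; split=> //.
have L2L : L0 :&: L1 \proper L := sub_proper_trans (subsetIl L0 L1) L0L.
have [x [Ux ex]] := (phi_image_filtration h2 hL L2L (pr K g)).2 s2.
have [e [De [_ eg]]] :=
  (filtration_change h2 hL (subxx _) L2L g).2 (conj EF2 (ex_intro _ x (conj Ux ex))).
by exists e.
Qed.

Lemma zeroE_closed L : IK K L -> closed (@zeroE L).
Proof.
move=> hL; apply: closed_setI; last exact: closed_preimage (pr_continuous hL) (zero_closed hL).
apply: closed_equalizer (metrizable_hausdorff (E_metrizable hL)) (@continuous_id _) _.
exact: continuous_comp (pr_continuous hL) (zr_continuous hL).
Qed.

Lemma footE_continuous L : IK K L -> forall G : X -> Prop, open G ->
  exists O : E K L -> Prop, open O /\ forall e, zeroE e -> (O e <-> G (footE e)).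
Proof.
move=> hL G oG; have [O [oO OG]] := psi_zero_continuous hL oG.
by exists (fun e => O (pr K e)); split=> [|e [_ Ze]]; [exact: pr_continuous | exact: OG].
Qed.

Lemma footE_open L : IK K L -> forall O : E K L -> Prop, open O ->
  exists G : X -> Prop, open G /\ (forall e, zeroE e -> (G (footE e) <-> O e)) /\
    (forall y, G y -> exists e : E K L, zeroE e /\ footE e = y).
Proof.
move=> hL O oO; have [G [oG [GO Gsurj]]] := psi_zero_open hL (zr_continuous hL oO).
exists G; split=> //; split=> [e [ez Ze]|y Gy]; first by rewrite {2}ez; exact: GO.
have [x [Zx <-]] := Gsurj y Gy.
by exists (zr K x); rewrite /zeroE /footE (pr_zr hL).
Qed.

Lemma Phi_zero L L' : IK K L -> IK K L' -> L \proper L' -> forall e, DE L L' e ->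
  (zeroE (Phi K L L' e) <-> zeroE e) /\ (zeroE e -> footE (Phi K L L' e) = footE e).
Proof.
move=> hL hL' LL' e De.
have prPhi : pr K (Phi K L L' e) = phi K L L' (pr K e) := pr_Phi hL hL' LL' De.
have [ZZ ff] := phi_zero hL hL' LL' De.
split; last by move=> [_ Ze]; rewrite /footE prPhi; exact: ff.
rewrite /zeroE prPhi (zr_phi hL hL' LL' De); split=> [[ePhi Zphi]|[ee Ze]].
  split; last exact: ZZ.1 Zphi.
  by apply: (Phi_inj hL hL' LL') => //; rewrite /DE (pr_zr hL).
by split; [rewrite -ee | exact: ZZ.2 Ze].
Qed.

Local Notation Eglue := (@glue_proj N (IK K) (E K) DE (Phi K)).

Lemma Eglue_zero_sub L M (hL : IK K L) (hM : IK K M) (c : U K L) (m : U K M) :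
  Z c -> Z m -> L \subset M -> psi K m = psi K c ->
  Eglue (glue_pt hL (zr K c)) = Eglue (glue_pt hM (zr K m)).
Proof.
move=> Zc Zm LM emc.
have [eLM|neLM] := eqVneq L M.
  subst M; rewrite (proof_irrelevance _ hM hL); congr (Eglue (glue_pt hL (zr K _))).
  exact: (embedding_on_inj (psi_embedding hL)).
have LM' : L \proper M by rewrite properEneq neLM LM.
have [Uc <-] := zero_change hL hM LM' Zc Zm emc.
apply/quot_proj_eq/rst_step; rewrite /glue_rel /= (zr_phi hL hM LM' Uc).
by rewrite /DE (pr_zr hL).
Qed.

Lemma footE_glue L L' (hL : IK K L) (hL' : IK K L') (a : E K L) (b : E K L') :
  zeroE a -> zeroE b -> footE a = footE b -> Eglue (glue_pt hL a) = Eglue (glue_pt hL' b).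
Proof.
move=> [ea Za] [eb Zb] eab; rewrite ea eb.
have [hM [m [Zm ema]]] := zero_union hL hL' Za Zb eab.
rewrite (Eglue_zero_sub hL hM Za Zm (subsetUl _ _) ema).
by rewrite (Eglue_zero_sub hL' hM Zb Zm (subsetUr _ _)) // ema.
Qed.

End TameAtlas.

Section Conclusions.
Variables (X : Top) (N : nat) (K : KData X N).
Hypotheses (X_metrizable : metrizable X) (K_tame : tame_top_atlas K).

Lemma Kquot_hausdorff : hausdorff (Kquot K).
Proof.
exact: (@glue_hausdorff N (IK K) (U K) (UU K) (phi K) (@Z X N K) X (fun L x => psi K x)
  (U_metrizable K_tame) (phi_embedding K_tame) (phi_image_closed K_tame)
  (phi_cocycle K_tame) (UU_union K_tame) (UU_push K_tame) (phi_descends K_tame)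
  (phi_overlap K_tame) (zero_closed K_tame) (psi_zero_continuous K_tame)
  (phi_zero K_tame) (psi_glue K_tame) (metrizable_hausdorff X_metrizable)).
Qed.

Lemma Equot_hausdorff : hausdorff (Equot K).
Proof.
exact: (@glue_hausdorff N (IK K) (E K) (@DE X N K) (Phi K) (@zeroE X N K) X (@footE X N K)
  (E_metrizable K_tame) (Phi_embedding K_tame) (Phi_image_closed K_tame)
  (Phi_cocycle K_tame) (DE_union K_tame) (DE_push K_tame) (Phi_descends K_tame)
  (Phi_overlap K_tame) (zeroE_closed K_tame) (footE_continuous K_tame)
  (Phi_zero K_tame) (footE_glue K_tame) (metrizable_hausdorff X_metrizable)).
Qed.

Lemma pi_K_embedding I (hI : IK K I) :
  embedding (fun x : U K I => pi_K (existT _ (exist _ I hI) x)).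
Proof.
exact: (@glue_proj_embedding N (IK K) (U K) (UU K) (phi K) (@Z X N K) X (fun L x => psi K x)
  (U_metrizable K_tame) (UU_open K_tame) (phi_embedding K_tame) (phi_image_closed K_tame)
  (phi_cocycle K_tame) (UU_union K_tame) (UU_push K_tame) (phi_descends K_tame)
  (phi_overlap K_tame) (zero_closed K_tame) (psi_zero_continuous K_tame)
  (phi_zero K_tame) (psi_glue K_tame) (psi_zero_open K_tame) I hI).
Qed.

Lemma pi_E_embedding I (hI : IK K I) :
  embedding (fun e : E K I => pi_E (existT _ (exist _ I hI) e)).
Proof.
exact: (@glue_proj_embedding N (IK K) (E K) (@DE X N K) (Phi K) (@zeroE X N K) X (@footE X N K)
  (E_metrizable K_tame) (DE_open K_tame) (Phi_embedding K_tame) (Phi_image_closed K_tame)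
  (Phi_cocycle K_tame) (DE_union K_tame) (DE_push K_tame) (Phi_descends K_tame)
  (Phi_overlap K_tame) (zeroE_closed K_tame) (footE_continuous K_tame)
  (Phi_zero K_tame) (footE_glue K_tame) (footE_open K_tame) I hI).
Qed.
End Conclusions.

Theorem mainTheorem7 (X : Top) (N : nat) (K : KData X N) :
  compact_space X -> metrizable X -> tame_top_atlas K ->
  hausdorff (Kquot K) /\ hausdorff (Equot K) /\
  (forall (I : {set 'I_N}) (hI : IK K I),
     @embedding (U K I) (Kquot K)
       (fun x => pi_K (existT _ (exist _ I hI) x)) /\
     @embedding (E K I) (Equot K)
       (fun e => pi_E (existT _ (exist _ I hI) e))).
Proof.
move=> _ hX hK; split; first exact: Kquot_hausdorff.
split; first exact: Equot_hausdorff.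
by move=> I hI; split; [exact: pi_K_embedding | exact: pi_E_embedding].
Qed.
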